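(* Consider the equation, for an unknown formal power series $U(T,m,\epsilon)$ in $T$, $$Q(im)U(qT,m,\epsilon)=T^{d_{D_1}}R_{D_1}(im)U(q^{\frac{d_{D_1}}{k_1}+1}T,m,\epsilon)+T^{d_{D_2}}R_{D_2}(im)U(q^{\frac{d_{D_2}}{k_2}+1}T,m,\epsilon)$$ $$+\sum_{\ell=1}^{D-1}\epsilon^{\Delta_\ell-d_\ell}T^{d_\ell}\,\sigma_{q,T}^{\delta_\ell}\Big(\frac{1}{(2\pi)^{1/2}}\int_{-\infty}^{+\infty}C_\ell(T,m-m_1,\epsilon)R_\ell(im_1)U(T,m_1,\epsilon)\,dm_1\Big)+\hat F(qT,m,\epsilon).$$ There exists a unique formal power series $\hat U(T,m,\epsilon)=\sum_{n\ge0}U_n(m,\epsilon)T^n$ solving this equation, and its coefficients $U_n(m,\epsilon)$ belong to $E_{(\beta,\mu)}$ (as functions of $m$) and depend holomorphically on $\epsilon\in D(0,\epsilon_0)$.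
   Context: Fix a real $q>1$, integers $1\le k_1<k_2$, and $\kappa$ with $1/\kappa=1/k_1-1/k_2$. Fix integers $D,D_1,D_2\ge3$, positive integers $d_{D_1},d_{D_2}$ and, for $1\le\ell\le D-1$, integers $d_\ell\ge1,\delta_\ell\ge1,\Delta_\ell\ge0$ with $\delta_1=1$, $\delta_\ell<\delta_{\ell+1}$ ($1\le \ell\le D-2$), and for all $1\le\ell\le D-1$: $\Delta_\ell\ge d_\ell$, $d_\ell/k_2+1\ge\delta_\ell$, $(d_{D_1}-1)/\kappa-d_\ell/k_2\ge\delta_\ell-1$, $(d_{D_2}-1)/k_2\ge\delta_\ell-1$; moreover $k_1d_{D_2}>k_2d_{D_1}$. Let $Q,R_{D_1},R_{D_2},R_1,\dots,R_{D-1}\in\mathbb{C}[X]$ with $\deg R_{D_1}=\deg R_{D_2}$, $\deg Q\ge\deg R_{D_j}\ge\deg R_\ell$, $Q(im)\neq0$ and $R_{D_j}(im)\ne0$ for all $m\in\mathbb{R}$, $j=1,2$. Fix $\beta>0$ and $\mu>\deg(R_{D_j})+1$. $E_{(\beta,\mu)}$ is the Banach space of continuous $h:\mathbb{R}\to\mathbb{C}$ with $\|h\|_{(\beta,\mu)}=\sup_m(1+|m|)^\mu e^{\beta|m|}|h(m)|<\infty$. For $\gamma\in\mathbb{R}$, $\sigma_{q,T}^{\gamma}$ is the operator $g(T)\mapsto g(q^\gamma T)$. Let $\epsilon_0>0$. For $n\ge0$, $F_n(m,\epsilon)$ belongs to $E_{(\beta,\mu)}$ in $m$ and depends holomorphically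 on $\epsilon\in D(0,\epsilon_0)$, and there are $C_F,T_0>0$ with $\|F_n\|_{(\beta,\mu)}\le C_F T_0^{-n}(q^{1/k_1})^{n(n-1)/2}$ for all $n\ge0$; $\hat F(T,m,\epsilon)=\sum_{n\ge0}F_n(m,\epsilon)T^n$. For $1\le\ell\le D-1$, $C_\ell(T,m,\epsilon)=\sum_{j=0}^{p_1}C_{\ell,j}(m,\epsilon)T^j$ with $C_{\ell,j}\in E_{(\beta,\mu)}$ in $m$, holomorphic in $\epsilon\in D(0,\epsilon_0)$. *)

From Stdlib Require Import Reals List.
From Coquelicot Require Import Coquelicot.
Open Scope R_scope.

(** * Polynomials in C[X], as coefficient lists (lowest degree first). *)
Definition peval (p : list C) (z : C) : C :=
  fold_right (fun a acc => (a + z * acc)%C) (RtoC 0) p.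

Definition has_deg (p : list C) (n : nat) : Prop :=
  nth n p (RtoC 0) <> RtoC 0 /\ (forall i, (n < i)%nat -> nth i p (RtoC 0) = RtoC 0).

Definition deg_le (p : list C) (n : nat) : Prop :=
  forall i, (n < i)%nat -> nth i p (RtoC 0) = RtoC 0.

Definition im (m : R) : C := (Ci * RtoC m)%C.

Definition weight (beta mu m : R) : R :=
  Rpower (1 + Rabs m) mu * exp (beta * Rabs m).

Definition wnorm_le (beta mu : R) (h : R -> C) (M : R) : Prop :=
  forall m, weight beta mu m * Cmod (h m) <= M.

Definition inE (beta mu : R) (h : R -> C) : Prop :=
  (forall m, continuous h m) /\ exists M, wnorm_le beta mu h M.

Definition in_disc (eps0 : R) (z : C) : Prop := Cmod z < eps0.

Definition holoE (beta mu eps0 : R) (h : C -> R -> C) : Prop :=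
  forall eps, in_disc eps0 eps ->
    inE beta mu (h eps) /\
    exists h' : R -> C, inE beta mu h' /\
      forall eta, 0 < eta -> exists delta, 0 < delta /\
        forall z : C, z <> RtoC 0 -> Cmod z < delta ->
          wnorm_le beta mu
            (fun m => ((h (eps + z)%C m - h eps m) / z - h' m)%C) eta.

(** * Formal power series in T whose coefficients are functions of m
    (the parameter eps being fixed). Coefficient n of T^n. *)
Definition fps := nat -> R -> C.

Definition fps_add (U V : fps) : fps := fun n m => (U n m + V n m)%C.

(** g(T) |-> g(c T) *)
Definition fps_dil (c : R) (U : fps) : fps := fun n m => (RtoC (c ^ n) * U n m)%C.

Definition sigma_qT (q gamma : R) (U : fps) : fps := fps_dil (Rpower q gamma) U.

Definition fps_mulT (d : nat) (U : fps) : fps :=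
  fun n m => if Nat.leb d n then U (n - d)%nat m else RtoC 0.

Definition fps_mulm (g : R -> C) (U : fps) : fps := fun n m => (g m * U n m)%C.

Definition fps_scal (a : C) (U : fps) : fps := fun n m => (a * U n m)%C.

Definition integ (f : R -> C) : C :=
  (RtoC (/ sqrt (2 * PI)) *
   RInt_gen (V := C_R_CompleteNormedModule) f
     (Rbar_locally m_infty) (Rbar_locally p_infty))%C.

Definition conv_integrand (Cj : nat -> R -> C) (Rl : list C) (U : fps)
    (j p : nat) (m : R) : R -> C :=
  fun m1 => (Cj j (m - m1)%R * peval Rl (im m1) * U p m1)%C.

(** T-coefficients of (2 pi)^(-1/2) int C(T,m-m1) R(im1) U(T,m1) dm1,
    C(T,m) = sum_{j=0}^{p1} Cj j m T^j (Cauchy product in T). *)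
Definition fps_conv (Cj : nat -> R -> C) (p1 : nat) (Rl : list C) (U : fps) : fps :=
  fun n m => sum_n (fun j => if Nat.leb j n
                             then integ (conv_integrand Cj Rl U j (n - j) m)
                             else RtoC 0) p1.

Definition conv_defined (Cj : nat -> R -> C) (p1 : nat) (Rl : list C) (U : fps) : Prop :=
  forall n m j, (j <= p1)%nat -> (j <= n)%nat ->
    ex_RInt_gen (V := C_R_CompleteNormedModule) (conv_integrand Cj Rl U j (n - j) m)
      (Rbar_locally m_infty) (Rbar_locally p_infty).

Definition Cpow (z : C) (n : nat) : C := pow_n (K := C_Ring) z n.

Definition eq_rhs (q : R) (k1 k2 : nat) (D : nat) (dD1 dD2 : nat)
    (d delta Delta : nat -> nat) (RD1 RD2 : list C) (Rl : nat -> list C)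
    (p1 : nat) (Cc : nat -> nat -> R -> C) (Fh : fps) (eps : C) (U : fps) : fps :=
  fps_add
    (fps_mulT dD1 (fps_mulm (fun m => peval RD1 (im m))
       (fps_dil (Rpower q (INR dD1 / INR k1 + 1)) U)))
  (fps_add
    (fps_mulT dD2 (fps_mulm (fun m => peval RD2 (im m))
       (fps_dil (Rpower q (INR dD2 / INR k2 + 1)) U)))
  (fps_add
    (fun n m => sum_n_m (fun l =>
        fps_scal (Cpow eps (Delta l - d l))
          (fps_mulT (d l) (sigma_qT q (INR (delta l))
             (fps_conv (Cc l) p1 (Rl l) U))) n m) 1 (D - 1))
    (fps_dil q Fh))).

Definition eq_lhs (q : R) (Q : list C) (U : fps) : fps :=
  fps_mulm (fun m => peval Q (im m)) (fps_dil q U).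

Definition solves (q : R) (k1 k2 : nat) (D : nat) (dD1 dD2 : nat)
    (d delta Delta : nat -> nat) (Q RD1 RD2 : list C) (Rl : nat -> list C)
    (p1 : nat) (Cc : nat -> nat -> R -> C) (Fh : fps) (eps : C) (U : fps) : Prop :=
  (forall l, (1 <= l <= D - 1)%nat -> conv_defined (Cc l) p1 (Rl l) U) /\
  eq_lhs q Q U = eq_rhs q k1 k2 D dD1 dD2 d delta Delta RD1 RD2 Rl p1 Cc Fh eps U.

(* Since [dD1], [dD2] and all [d l] are at least 1, the coefficient of [T^n] in the equation
   reads [Q(im) q^n U_n = (terms in the U_k, k < n) + q^n F_n]; hence the solution is unique
   and is built by recursion on [n].  Each step stays within holomorphic [E_(beta,mu)]-valued
   maps: multiplication by [R_D(im)/Q(im)] is bounded because [deg R_D <= deg Q] and [Q] has no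
   zero on the imaginary axis, and [(A, B) |-> Q(im)^-1 int A(m - m1) R_l(im1) B(m1) dm1] is a
   bounded bilinear map on [E_(beta,mu)], since [(1 + |m1|)^(deg R_l) / weight m1] is integrable
   when [mu > deg R_l + 1]; bounded bilinear maps preserve holomorphy. *)

From Stdlib Require Import Reals List.
From Coquelicot Require Import Coquelicot.
From Stdlib Require Import Lra Lia FunctionalExtensionality.
Open Scope R_scope.

Definition decay (s x : R) : R := Rpower (1 + Rabs x) (- s).

(* [decay_tail s b] is the integral of [decay s] over [b, +oo), for [b >= 0]. *)
Definition decay_tail (s b : R) : R := Rpower (1 + b) (1 - s) / (s - 1).

Lemma Rpower_gt_0 x y : 0 < Rpower x y.
Proof. apply exp_pos. Qed.

Lemma exp_le_compat a b : a <= b -> exp a <= exp b.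
Proof. intros [H | ->]; [now left; apply exp_increasing | lra]. Qed.

Lemma Rmin_lt_inv z x y : z < Rmin x y -> z < x /\ z < y.
Proof. intros H. pose proof (Rmin_l x y). pose proof (Rmin_r x y). lra. Qed.

Lemma decay_tail_gt_0 s b : 1 < s -> 0 < decay_tail s b.
Proof. intros; apply Rdiv_lt_0_compat; [apply Rpower_gt_0 | lra]. Qed.

Lemma decay_tail_le s b : 1 < s -> 0 <= b -> decay_tail s b <= / (s - 1).
Proof.
  intros Hs Hb. unfold decay_tail, Rdiv. rewrite <- (Rmult_1_l (/ (s - 1))) at 2.
  apply Rmult_le_compat_r; [left; apply Rinv_0_lt_compat; lra|].
  assert (H : Rpower (1 + b) (1 - s) <= Rpower (1 + b) 0) by (apply Rle_Rpower; lra).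
  rewrite Rpower_O in H by lra. exact H.
Qed.

Lemma decay_tail_small K s e : 1 < s -> 0 <= K -> 0 < e ->
  exists L, 0 <= L /\ K * decay_tail s L < e.
Proof.
  intros Hs HK He. set (e' := e / (K + 1)).
  assert (He' : 0 < e') by (apply Rdiv_lt_0_compat; lra).
  set (M := / (e' * (s - 1) ^ 2)).
  assert (HM : 0 < M) by (apply Rinv_0_lt_compat, Rmult_lt_0_compat; [lra | apply pow_lt; lra]).
  assert (Hsmall : decay_tail s (exp M - 1) < e').
  { unfold decay_tail, Rpower. replace (1 + (exp M - 1)) with (exp M) by ring. rewrite ln_exp.
    replace ((1 - s) * M) with (- ((s - 1) * M)) by ring. rewrite exp_Ropp.
    pose proof (exp_ineq1_le ((s - 1) * M)).
    assert (0 < (s - 1) * M) by (apply Rmult_lt_0_compat; lra).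
    assert (Hk : (s - 1) * (1 + (s - 1) * M) = (s - 1) + / e') by (unfold M; field; lra).
    apply Rle_lt_trans with (/ (s - 1) / (1 + (s - 1) * M)).
    - unfold Rdiv. rewrite Rmult_comm.
      apply Rmult_le_compat_l; [left; apply Rinv_0_lt_compat; lra|].
      apply Rinv_le_contravar; lra.
    - unfold Rdiv. rewrite <- Rinv_mult, Hk.
      pose proof (Rinv_0_lt_compat e' He').
      replace e' with (/ / e') at 2 by apply Rinv_inv.
      apply Rinv_lt_contravar; [apply Rmult_lt_0_compat|]; lra. }
  exists (exp M - 1). split; [pose proof (exp_ineq1_le M); lra|].
  pose proof (decay_tail_gt_0 s (exp M - 1) Hs).
  apply Rle_lt_trans with ((K + 1) * decay_tail s (exp M - 1)); [nra|].
  replace e with ((K + 1) * e') by (unfold e'; field; lra).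
  apply Rmult_lt_compat_l; lra.
Qed.

Lemma is_RInt_decay_pos s b b' : 1 < s -> 0 <= b <= b' ->
  is_RInt (decay s) b b' (decay_tail s b - decay_tail s b').
Proof.
  intros Hs Hb.
  apply is_RInt_ext with (f := fun x => Rpower (1 + x) (- s)).
  { intros x Hx. rewrite Rmin_left, Rmax_right in Hx by lra.
    unfold decay. rewrite Rabs_pos_eq by lra. reflexivity. }
  replace (decay_tail s b - decay_tail s b')
    with (minus ((fun x => - decay_tail s x) b') ((fun x => - decay_tail s x) b))
    by (unfold minus, plus, opp; simpl; ring).
  apply (is_RInt_derive (V := R_CompleteNormedModule) (fun x => - decay_tail s x)); intros x Hx;
    rewrite Rmin_left, Rmax_right in Hx by lra.
  - unfold decay_tail, Rpower. auto_derive; [lra|].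
    replace ((1 - s) * ln (1 + x)) with (- s * ln (1 + x) + ln (1 + x)) by ring.
    rewrite exp_plus, exp_ln by lra. field. lra.
  - apply (ex_derive_continuous (V := R_NormedModule)). unfold Rpower. auto_derive. lra.
Qed.

Lemma is_RInt_decay_neg s a' a : 1 < s -> a' <= a <= 0 ->
  is_RInt (decay s) a' a (decay_tail s (- a) - decay_tail s (- a')).
Proof.
  intros Hs Ha.
  assert (H := is_RInt_decay_pos s (- a) (- a') Hs ltac:(lra)).
  apply (is_RInt_comp_opp (V := R_NormedModule)), is_RInt_swap, is_RInt_opp in H.
  rewrite opp_opp in H. eapply is_RInt_ext; [| exact H].
  intros x _. unfold decay, opp; simpl. rewrite Rabs_Ropp. ring.
Qed.

Lemma RInt_decay_le s a b : 1 < s -> a <= b ->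
  exists l, is_RInt (decay s) a b l /\ l <= 2 / (s - 1).
Proof.
  intros Hs Hab.
  assert (Hinv : 0 < / (s - 1)) by (apply Rinv_0_lt_compat; lra).
  pose proof (decay_tail_le s) as Hle. pose proof (decay_tail_gt_0 s) as Hgt.
  destruct (Rle_dec 0 a) as [Ha|Ha]; [|destruct (Rle_dec b 0) as [Hb|Hb]].
  - exists (decay_tail s a - decay_tail s b). split; [apply is_RInt_decay_pos; lra|].
    specialize (Hle a Hs Ha). specialize (Hgt b Hs). unfold Rdiv; lra.
  - exists (decay_tail s (- b) - decay_tail s (- a)). split; [apply is_RInt_decay_neg; lra|].
    specialize (Hle (- b) Hs ltac:(lra)). specialize (Hgt (- a) Hs). unfold Rdiv; lra.
  - exists (plus (decay_tail s (- 0) - decay_tail s (- a)) (decay_tail s 0 - decay_tail s b)).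
    split.
    + apply (is_RInt_Chasles (V := R_NormedModule)) with 0;
        [apply is_RInt_decay_neg | apply is_RInt_decay_pos]; lra.
    + unfold plus; simpl. rewrite Ropp_0.
      specialize (Hle 0 Hs (Rle_refl 0)). pose proof (Hgt (- a) Hs). pose proof (Hgt b Hs).
      unfold Rdiv; lra.
Qed.

Lemma RInt_decay_shift_le s c a b : 1 < s -> a <= b ->
  exists l, is_RInt (fun x => decay s (x - c)) a b l /\ l <= 2 / (s - 1).
Proof.
  intros Hs Hab.
  destruct (RInt_decay_le s (1 * a + - c) (1 * b + - c) Hs ltac:(lra)) as [l [Hl Hle]].
  exists l. split; [|exact Hle].
  apply (is_RInt_comp_lin (V := R_NormedModule)) in Hl.
  eapply is_RInt_ext; [| exact Hl]. intros x _.
  unfold scal; simpl; unfold mult; simpl. rewrite !Rmult_1_l. reflexivity.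
Qed.

Definition Ccont (f : R -> C) : Prop := forall x, continuous f x.


(* Coquelicot gives [C] two uniform structures, the product one and the one of the
   absolute ring [C_AbsRing]; they have the same neighbourhoods. *)
Lemma locally_C_AbsRing (x : C) (P : C -> Prop) :
  locally (T := C_UniformSpace) x P <-> locally (T := AbsRing_UniformSpace C_AbsRing) x P.
Proof.
  assert (Hnf := norm_factor_gt_0 (K := C_AbsRing) (V := C_NormedModule)).
  split; intros [e He].
  - exists e. intros y Hy. apply He, (norm_compat1 (V := C_NormedModule)), Hy.
  - assert (He' : 0 < e / norm_factor (V := C_NormedModule))
      by (apply Rdiv_lt_0_compat; [apply cond_pos | lra]).
    exists (mkposreal _ He'). intros y Hy. apply He.
    apply (norm_compat2 (V := C_NormedModule) x y (mkposreal _ He')) in Hy. simpl in Hy.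
    change (Cmod (minus y x) < e).
    replace (pos e) with (norm_factor (K := C_AbsRing) (V := C_NormedModule)
      * (e / norm_factor (V := C_NormedModule))) by (field; lra).
    exact Hy.
Qed.

Lemma continuous_Cmult (f g : R -> C) x : continuous f x -> continuous g x ->
  continuous (fun y => Cmult (f y) (g y)) x.
Proof.
  intros Hf Hg P HP. apply locally_C_AbsRing in HP.
  apply (continuous_mult (K := C_AbsRing)); [..| exact HP];
    intros P' HP'; [apply Hf | apply Hg]; apply locally_C_AbsRing, HP'.
Qed.

Lemma continuous_C_eps (g : R -> C) m0 : continuous g m0 <->
  forall e, 0 < e -> exists d, 0 < d /\
    forall m, Rabs (m - m0) < d -> Cmod (Cminus (g m) (g m0)) < e.
Proof.
  split.
  - intros H e He.
    assert (HP : locally (T := AbsRing_UniformSpace C_AbsRing) (g m0)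
                   (fun w => Cmod (Cminus w (g m0)) < e)) by (exists (mkposreal e He); auto).
    apply locally_C_AbsRing, H in HP. destruct HP as [d Hd].
    exists d. split; [apply cond_pos | intros m Hm; apply (Hd m), Hm].
  - intros H P HP. apply locally_C_AbsRing in HP. destruct HP as [eps HP].
    destruct (H eps (cond_pos eps)) as [d [Hd Hm]].
    exists (mkposreal d Hd). intros m Hmm. apply HP, Hm, Hmm.
Qed.

Lemma continuous_Cinv (g : R -> C) x : continuous g x -> g x <> RtoC 0 ->
  continuous (fun m => Cinv (g m)) x.
Proof.
  intros Hg Hnz. apply continuous_C_eps. intros e He.
  set (w0 := g x). assert (Hw0 : 0 < Cmod w0) by (apply Cmod_gt_0, Hnz).
  set (r := Rmin (Cmod w0 / 2) (e * Cmod w0 ^ 2 / 2)).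
  assert (Hr : 0 < r) by (apply Rmin_pos; [lra | apply Rdiv_lt_0_compat;
    [apply Rmult_lt_0_compat; [lra | apply pow_lt; lra] | lra]]).
  destruct (proj1 (continuous_C_eps g x) Hg r Hr) as [d [Hd Hm]].
  exists d; split; [exact Hd|]. intros m Hmd. specialize (Hm m Hmd). fold w0 in Hm.
  set (w := g m) in *.
  assert (E : Cmod (Cminus w0 w) = Cmod (Cminus w w0)) by (rewrite <- Cmod_opp; f_equal; ring).
  assert (Hr1 : r <= Cmod w0 / 2) by apply Rmin_l.
  assert (Hr2 : r <= e * Cmod w0 ^ 2 / 2) by apply Rmin_r.
  assert (Hw : Cmod w0 / 2 <= Cmod w).
  { pose proof (Cmod_triangle w (Cminus w0 w)) as Htri.
    replace (Cplus w (Cminus w0 w)) with w0 in Htri by ring. lra. }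
  assert (Hwnz : w <> RtoC 0) by (intros Hw'; rewrite Hw', Cmod_0 in Hw; lra).
  replace (Cminus (Cinv w) (Cinv w0)) with (Cmult (Cminus w0 w) (Cinv (Cmult w w0)))
    by (field; auto).
  rewrite Cmod_mult, Cmod_inv, Cmod_mult, E by (apply Cmult_neq_0; auto).
  apply Rmult_lt_reg_r with (Cmod w * Cmod w0); [apply Rmult_lt_0_compat; lra|].
  rewrite Rmult_assoc, Rinv_l, Rmult_1_r
    by (apply Rgt_not_eq, Rmult_lt_0_compat; lra).
  assert (Cmod w0 / 2 * Cmod w0 <= Cmod w * Cmod w0) by (apply Rmult_le_compat_r; lra).
  replace (e * Cmod w0 ^ 2 / 2) with (e * (Cmod w0 / 2 * Cmod w0)) in Hr2 by (simpl; field).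
  nra.
Qed.

Lemma continuous_RtoC x : continuous (fun m : R => RtoC m) x.
Proof.
  apply continuous_C_eps. intros e He. exists e; split; [exact He|]. intros m Hm.
  rewrite <- RtoC_minus, Cmod_R. exact Hm.
Qed.

Lemma Ccont_peval_im p : Ccont (fun m => peval p (im m)).
Proof.
  intros x. induction p as [|a p IH]; simpl.
  - apply continuous_const.
  - apply (continuous_plus (V := C_NormedModule)); [apply continuous_const|].
    apply continuous_Cmult; [|exact IH].
    apply continuous_Cmult; [apply continuous_const | apply continuous_RtoC].
Qed.

(** * Improper integrals of dominated functions *)

Notation CV := C_R_CompleteNormedModule.

Definition CRInt (f : R -> C) (a b : R) : C := RInt (V := CV) f a b.

Definition CRInt_line (f : R -> C) : C :=
  RInt_gen (V := CV) f (Rbar_locally m_infty) (Rbar_locally p_infty).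

Definition dominated (f : R -> C) (K s : R) : Prop :=
  Ccont f /\ 1 < s /\ 0 <= K /\ forall x, Cmod (f x) <= K * decay s x.

Lemma is_RInt_CRInt f a b : Ccont f -> is_RInt (V := CV) f a b (CRInt f a b).
Proof. intros Hf. apply RInt_correct, ex_RInt_continuous. intros; apply Hf. Qed.

Lemma CRInt_norm_le f g a b lg : a <= b -> Ccont f ->
  (forall x, a <= x <= b -> Cmod (f x) <= g x) -> is_RInt g a b lg ->
  Cmod (CRInt f a b) <= lg.
Proof.
  intros Hab Hf Hg Hl. rewrite Cmod_norm.
  apply (norm_RInt_le (V := CV) f g a b _ lg Hab); [| apply is_RInt_CRInt, Hf | exact Hl].
  intros x Hx; rewrite <- Cmod_norm; auto.
Qed.

Lemma CRInt_const_le h L e : 0 <= L -> Ccont h ->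
  (forall x, - L <= x <= L -> Cmod (h x) <= e) -> Cmod (CRInt h (- L) L) <= 2 * L * e.
Proof.
  intros HL Hh Hb. apply CRInt_norm_le with (g := fun _ => e); auto; [lra|].
  replace (2 * L * e) with (scal (L - - L) e) by (unfold scal; simpl; unfold mult; simpl; ring).
  apply (is_RInt_const (V := R_NormedModule)).
Qed.

Lemma CRInt_tail_pos_le f K s b b' : dominated f K s -> 0 <= b <= b' ->
  Cmod (CRInt f b b') <= K * decay_tail s b.
Proof.
  intros [Hf [Hs [HK Hb]]] Hbb. pose proof (decay_tail_gt_0 s b' Hs).
  apply Rle_trans with (K * (decay_tail s b - decay_tail s b')); [|nra].
  apply CRInt_norm_le with (g := fun x => K * decay s x); auto; [lra|].
  apply (is_RInt_scal (V := R_NormedModule)), is_RInt_decay_pos; auto.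
Qed.

Lemma CRInt_tail_neg_le f K s a' a : dominated f K s -> a' <= a <= 0 ->
  Cmod (CRInt f a' a) <= K * decay_tail s (- a).
Proof.
  intros [Hf [Hs [HK Hb]]] Hbb. pose proof (decay_tail_gt_0 s (- a') Hs).
  apply Rle_trans with (K * (decay_tail s (- a) - decay_tail s (- a'))); [|nra].
  apply CRInt_norm_le with (g := fun x => K * decay s x); auto; [lra|].
  apply (is_RInt_scal (V := R_NormedModule)), is_RInt_decay_neg; auto.
Qed.

Lemma CRInt_outside_le f K s a b L : dominated f K s -> 0 <= L -> a <= - L -> L <= b ->
  Cmod (Cminus (CRInt f a b) (CRInt f (- L) L)) <= 2 * K * decay_tail s L.
Proof.
  intros HD HL Ha Hb. pose proof HD as [Hf _].
  assert (Hex : forall u v, ex_RInt (V := CV) f u v)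
    by (intros; apply ex_RInt_continuous; intros; apply Hf).
  unfold CRInt.
  rewrite <- (RInt_Chasles (V := CV) f a (- L) b), <- (RInt_Chasles (V := CV) f (- L) L b)
    by apply Hex.
  change (Cmod (Cminus (Cplus (CRInt f a (- L)) (Cplus (CRInt f (- L) L) (CRInt f L b)))
    (CRInt f (- L) L)) <= 2 * K * decay_tail s L).
  replace (Cminus _ _) with (Cplus (CRInt f a (- L)) (CRInt f L b)) by ring.
  pose proof (CRInt_tail_neg_le f K s a (- L) HD ltac:(lra)) as Hneg.
  pose proof (CRInt_tail_pos_le f K s L b HD ltac:(lra)).
  rewrite Ropp_involutive in Hneg. pose proof (Cmod_triangle (CRInt f a (- L)) (CRInt f L b)).
  lra.
Qed.

(* The truncated integrals over [a, b] form a Cauchy family as a -> -oo, b -> +oo. *)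
Lemma ex_RInt_gen_dominated f K s : dominated f K s ->
  ex_RInt_gen (V := CV) f (Rbar_locally m_infty) (Rbar_locally p_infty).
Proof.
  intros HD. pose proof HD as [Hf [Hs [HK Hb]]].
  set (F := filtermap (fun ab : R * R => CRInt f (fst ab) (snd ab))
              (filter_prod (Rbar_locally m_infty) (Rbar_locally p_infty))).
  assert (PF : ProperFilter F).
  { apply filtermap_proper_filter, filter_prod_proper; apply Rbar_locally_filter. }
  assert (Hcauchy : cauchy (T := CV) F).
  { intros eps.
    destruct (decay_tail_small (2 * K) s eps Hs ltac:(lra) (cond_pos eps)) as [L [HL HtL]].
    exists (CRInt f (- L) L).
    apply Filter_prod with (fun a => a < - L) (fun b => L < b); [exists (- L) | exists L |]; auto.
    intros a b Ha Hb'. apply (norm_compat1 (V := CV)). rewrite <- Cmod_norm.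
    eapply Rle_lt_trans; [apply (CRInt_outside_le f K s a b L HD); lra | lra]. }
  exists (lim (T := CV) F). intros P [e He]. unfold filtermapi.
  eapply filter_imp; [| exact (complete_cauchy (T := CV) F PF Hcauchy e)]. intros [a b] Hab.
  exists (CRInt f a b). split; [apply is_RInt_CRInt, Hf | apply He, Hab].
Qed.

Lemma CRInt_line_approx f K s L : dominated f K s -> 0 <= L ->
  Cmod (Cminus (CRInt_line f) (CRInt f (- L) L)) <= 2 * K * decay_tail s L.
Proof.
  intros HD HL. pose proof HD as [Hf _].
  pose proof (RInt_gen_correct (V := CV) f (ex_RInt_gen_dominated f K s HD)) as Hl.
  fold (CRInt_line f) in Hl. set (l := CRInt_line f) in *.
  apply Rle_plus_epsilon. intros e He.
  assert (Hnf := norm_factor_gt_0 (K := R_AbsRing) (V := CV)).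
  set (e' := mkposreal (e / norm_factor (K := R_AbsRing) (V := CV))
               ltac:(apply Rdiv_lt_0_compat; lra)).
  destruct (Hl (ball l e') (locally_ball l e')) as [Q R' [M1 HQ] [M2 HR] HQR].
  set (a := Rmin (- L) (M1 - 1)). set (b := Rmax L (M2 + 1)).
  assert (Ha1 : a <= - L) by apply Rmin_l.
  assert (Ha2 : a < M1) by (unfold a; pose proof (Rmin_r (- L) (M1 - 1)); lra).
  assert (Hb1 : L <= b) by apply Rmax_l.
  assert (Hb2 : M2 < b) by (unfold b; pose proof (Rmax_r L (M2 + 1)); lra).
  destruct (HQR a b (HQ a Ha2) (HR b Hb2)) as [y [Hy Hball]]. simpl in Hy.
  rewrite <- (is_RInt_unique (V := CV) f a b y Hy) in Hball. fold (CRInt f a b) in Hball.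
  apply (norm_compat2 (V := CV) _ _ e') in Hball. rewrite <- Cmod_norm in Hball. simpl in Hball.
  replace (norm_factor * (e / norm_factor)) with e in Hball by (field; lra).
  pose proof (CRInt_outside_le f K s a b L HD HL Ha1 Hb1) as Hout.
  replace (Cminus l (CRInt f (- L) L)) with
    (Cplus (Copp (minus (CRInt f a b) l)) (Cminus (CRInt f a b) (CRInt f (- L) L)))
    by (unfold minus, plus, opp; simpl; ring).
  eapply Rle_trans; [apply Cmod_triangle|]. rewrite Cmod_opp.
  rewrite (Rplus_comm _ e). apply Rplus_le_compat; [left; exact Hball | exact Hout].
Qed.

Lemma CRInt_line_norm_le f K s B : dominated f K s ->
  (forall a b, a <= b -> Cmod (CRInt f a b) <= B) -> Cmod (CRInt_line f) <= B.
Proof.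
  intros HD HB. pose proof HD as [_ [Hs [HK _]]]. apply Rle_plus_epsilon. intros e He.
  destruct (decay_tail_small (2 * K) s e Hs ltac:(lra) He) as [L [HL Ht]].
  pose proof (CRInt_line_approx f K s L HD HL).
  pose proof (HB (- L) L ltac:(lra)).
  replace (CRInt_line f)
    with (Cplus (Cminus (CRInt_line f) (CRInt f (- L) L)) (CRInt f (- L) L)) by ring.
  pose proof (Cmod_triangle (Cminus (CRInt_line f) (CRInt f (- L) L)) (CRInt f (- L) L)).
  lra.
Qed.

Lemma Riemann_sum_Cmult (c : C) (f : R -> C) ptd :
  Riemann_sum (V := CV) (fun x => Cmult c (f x)) ptd = Cmult c (Riemann_sum (V := CV) f ptd).
Proof.
  induction ptd as [x0 | h ptd IH] using SF_cons_ind.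
  - unfold Riemann_sum; simpl. change zero with (RtoC 0). ring.
  - rewrite !Riemann_sum_cons, IH. change plus with Cplus.
    rewrite Cmult_plus_distr_l. f_equal.
    destruct (f (snd h)) as [u v], c as [cr ci].
    unfold scal; simpl; unfold prod_scal, scal; simpl; unfold mult; simpl.
    unfold Cmult; simpl. f_equal; ring.
Qed.

(* Riemann sums are C-linear and multiplication by [c] is continuous. *)
Lemma is_RInt_Cmult (c : C) f a b l : is_RInt (V := CV) f a b l ->
  is_RInt (V := CV) (fun x => Cmult c (f x)) a b (Cmult c l).
Proof.
  intros H. unfold is_RInt.
  apply filterlim_ext with (fun ptd => scal (V := C_NormedModule) c
    (scal (V := CV) (sign (b - a)) (Riemann_sum (V := CV) f ptd))).
  { intros ptd. rewrite Riemann_sum_Cmult. change (scal (V := C_NormedModule) c)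
      with (Cmult c). destruct c as [cr ci], (Riemann_sum f ptd) as [u v].
    unfold scal; simpl; unfold prod_scal, scal; simpl; unfold mult; simpl.
    unfold Cmult; simpl. f_equal; ring. }
  eapply filterlim_comp; [exact H | apply (filterlim_scal_r (V := C_NormedModule))].
Qed.

Lemma is_RInt_gen_Cmult (c : C) f l :
  is_RInt_gen (V := CV) f (Rbar_locally m_infty) (Rbar_locally p_infty) l ->
  is_RInt_gen (V := CV) (fun x => Cmult c (f x)) (Rbar_locally m_infty) (Rbar_locally p_infty)
    (Cmult c l).
Proof.
  intros H P HP.
  specialize (H _ (filterlim_scal_r (V := C_NormedModule) c l P HP)).
  unfold filtermapi in *. eapply filter_imp; [| exact H]. intros ab [y [Hy Py]].
  exists (Cmult c y). split; [apply is_RInt_Cmult, Hy | exact Py].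
Qed.

Lemma CRInt_line_lin f1 f2 c1 c2 :
  ex_RInt_gen (V := CV) f1 (Rbar_locally m_infty) (Rbar_locally p_infty) ->
  ex_RInt_gen (V := CV) f2 (Rbar_locally m_infty) (Rbar_locally p_infty) ->
  CRInt_line (fun x => Cplus (Cmult c1 (f1 x)) (Cmult c2 (f2 x)))
  = Cplus (Cmult c1 (CRInt_line f1)) (Cmult c2 (CRInt_line f2)).
Proof.
  intros [l1 H1] [l2 H2]. unfold CRInt_line.
  rewrite (is_RInt_gen_unique f1 l1 H1), (is_RInt_gen_unique f2 l2 H2).
  apply (is_RInt_gen_unique (V := CV)).
  apply (is_RInt_gen_plus (V := CV)); apply is_RInt_gen_Cmult; assumption.
Qed.

Lemma CRInt_line_continuous (F : R -> R -> C) K s m0 :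
  (forall m, dominated (F m) K s) ->
  (forall L e, 0 <= L -> 0 < e -> exists d, 0 < d /\ forall m, Rabs (m - m0) < d ->
     forall x, - L <= x <= L -> Cmod (Cminus (F m x) (F m0 x)) <= e) ->
  continuous (fun m => CRInt_line (F m)) m0.
Proof.
  intros HD HU. destruct (HD m0) as [_ [Hs [HK _]]].
  apply continuous_C_eps. intros e He.
  destruct (decay_tail_small (4 * K) s (e / 2) Hs ltac:(lra) ltac:(lra)) as [L [HL Ht]].
  destruct (HU L (e / (4 * (L + 1))) HL ltac:(apply Rdiv_lt_0_compat; lra)) as [d [Hd Hm]].
  exists d; split; [exact Hd|]. intros m Hmm.
  pose proof (CRInt_line_approx _ _ _ L (HD m) HL) as H1.
  pose proof (CRInt_line_approx _ _ _ L (HD m0) HL) as H2.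
  assert (Hex : forall m u v, ex_RInt (V := CV) (F m) u v)
    by (intros; apply ex_RInt_continuous; intros; apply HD).
  assert (H3 : Cmod (Cminus (CRInt (F m) (- L) L) (CRInt (F m0) (- L) L))
                 <= 2 * L * (e / (4 * (L + 1)))).
  { unfold CRInt. rewrite <- (RInt_minus (V := CV)) by apply Hex.
    apply CRInt_const_le; [exact HL | | intros x Hx; apply Hm; auto].
    intros x. apply (continuous_minus (V := C_NormedModule)); apply HD. }
  assert (H4 : 2 * L * (e / (4 * (L + 1))) < e / 2).
  { apply Rmult_lt_reg_l with (4 * (L + 1)); [lra|]. field_simplify; lra. }
  replace (Cminus (CRInt_line (F m)) (CRInt_line (F m0))) with
    (Cplus (Cminus (Cminus (CRInt_line (F m)) (CRInt (F m) (- L) L))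
                   (Cminus (CRInt_line (F m0)) (CRInt (F m0) (- L) L)))
           (Cminus (CRInt (F m) (- L) L) (CRInt (F m0) (- L) L))) by ring.
  eapply Rle_lt_trans; [apply Cmod_triangle|].
  pose proof (Cmod_triangle (Cminus (CRInt_line (F m)) (CRInt (F m) (- L) L))
                (Copp (Cminus (CRInt_line (F m0)) (CRInt (F m0) (- L) L)))) as Htri.
  rewrite Cmod_opp in Htri. fold (Cminus (Cminus (CRInt_line (F m)) (CRInt (F m) (- L) L))
    (Cminus (CRInt_line (F m0)) (CRInt (F m0) (- L) L))) in Htri.
  lra.
Qed.

Lemma Cmod_im m : Cmod (im m) = Rabs m.
Proof. unfold im. rewrite Cmod_mult, Cmod_Ci, Cmod_R. ring. Qed.

Lemma Cmod_Cpow z n : Cmod (Cpow z n) = Cmod z ^ n.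
Proof. induction n as [|n IH]; simpl; [apply Cmod_1 | rewrite Cmod_mult, IH; reflexivity]. Qed.

Lemma peval_zero p z : (forall i, nth i p (RtoC 0) = RtoC 0) -> peval p z = RtoC 0.
Proof.
  induction p as [|a p IH]; intros H; simpl; [reflexivity|].
  rewrite (H 0%nat : a = RtoC 0), IH; [ring | intros i; apply (H (S i))].
Qed.

Lemma peval_const p z : (forall i, (1 <= i)%nat -> nth i p (RtoC 0) = RtoC 0) ->
  peval p z = nth 0 p (RtoC 0).
Proof.
  intros H. destruct p as [|b p]; simpl; [reflexivity|].
  rewrite (peval_zero p); [ring | intros i; apply (H (S i)); lia].
Qed.

Lemma peval_firstn_skipn p d z :
  peval p z = Cplus (peval (firstn d p) z) (Cmult (Cpow z d) (peval (skipn d p) z)).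
Proof.
  revert p. induction d as [|d IH]; intros p; simpl.
  - change (pow_n z 0) with (RtoC 1). ring.
  - destruct p as [|a p]; simpl; [ring|]. rewrite (IH p). change mult with Cmult. ring.
Qed.

Lemma peval_im_upper p n : deg_le p n ->
  exists K, 0 <= K /\ forall m, Cmod (peval p (im m)) <= K * (1 + Rabs m) ^ n.
Proof.
  revert n. induction p as [|a p IH]; intros n Hd.
  - exists 0. split; [lra|]. intros m; simpl. rewrite Cmod_0. lra.
  - destruct n as [|n].
    + exists (Cmod a). split; [apply Cmod_ge_0|]. intros m. simpl.
      rewrite (peval_zero p), Cmult_0_r, Cplus_0_r; [lra|].
      intros i. apply (Hd (S i)). lia.
    + destruct (IH n) as [K [HK Hb]]; [intros i Hi; apply (Hd (S i)); lia|].
      exists (Cmod a + K). split; [pose proof (Cmod_ge_0 a); lra|].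
      intros m. simpl. eapply Rle_trans; [apply Cmod_triangle|].
      rewrite Cmod_mult, Cmod_im. specialize (Hb m).
      set (X := (1 + Rabs m) ^ n) in *.
      assert (H1 : 1 <= X) by (apply pow_R1_Rle; pose proof (Rabs_pos m); lra).
      pose proof (Rabs_pos m). pose proof (Cmod_ge_0 a).
      assert (Rabs m * Cmod (peval p (im m)) <= Rabs m * (K * X))
        by (apply Rmult_le_compat_l; auto).
      assert (0 <= Cmod a * Rabs m * X) by (apply Rmult_le_pos; [apply Rmult_le_pos|]; lra).
      nra.
Qed.

(* The leading term dominates twice the lower-order part once [|m| > M0]. *)
Lemma peval_im_lower_far_S Q d : has_deg Q (S d) ->
  exists c M, 0 < c /\ forall m, M < Rabs m -> c * (1 + Rabs m) ^ S d <= Cmod (peval Q (im m)).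
Proof.
  intros [Hnz Hz]. set (a := nth (S d) Q (RtoC 0)).
  assert (Ha : 0 < Cmod a) by (apply Cmod_gt_0; auto).
  destruct (peval_im_upper (firstn (S d) Q) d) as [K [HK HKb]].
  { intros i Hi. apply nth_overflow. pose proof (firstn_le_length (S d) Q). lia. }
  assert (Hsk : forall z, peval (skipn (S d) Q) z = a).
  { intros z. rewrite peval_const, nth_skipn, Nat.add_0_r; [reflexivity|].
    intros i Hi. rewrite nth_skipn. apply Hz. lia. }
  set (P := 2 ^ (S (S d))). assert (HP : 0 < P) by (apply pow_lt; lra).
  set (M0 := Rmax 1 (P * K / Cmod a)).
  assert (HM01 : 1 <= M0) by apply Rmax_l.
  assert (HM02 : P * K / Cmod a <= M0) by apply Rmax_r.
  exists (Cmod a / P), M0. split; [apply Rdiv_lt_0_compat; lra|]. intros m Hm.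
  set (X := (1 + Rabs m) ^ S d). pose proof (Rabs_pos m).
  rewrite (peval_firstn_skipn Q (S d)), Hsk.
  assert (Hhi : Cmod (Cmult (Cpow (im m) (S d)) a) = Rabs m ^ S d * Cmod a)
    by (rewrite Cmod_mult, Cmod_Cpow, Cmod_im; reflexivity).
  assert (HX : X <= 2 ^ S d * Rabs m ^ S d)
    by (unfold X; rewrite <- Rpow_mult_distr; apply pow_incr; lra).
  assert (HKm : K <= Cmod a / P * (1 + Rabs m)).
  { apply Rle_trans with (Cmod a / P * M0).
    - apply Rmult_le_reg_l with (P / Cmod a); [apply Rdiv_lt_0_compat; lra|].
      replace (P / Cmod a * (Cmod a / P * M0)) with M0 by (field; lra).
      replace (P / Cmod a * K) with (P * K / Cmod a) by (field; lra). lra.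
    - apply Rmult_le_compat_l; [left; apply Rdiv_lt_0_compat|]; lra. }
  assert (Hlo : Cmod (peval (firstn (S d) Q) (im m)) <= Cmod a / P * X).
  { eapply Rle_trans; [apply HKb|]. unfold X. simpl. rewrite <- Rmult_assoc.
    apply Rmult_le_compat_r; [apply pow_le; lra | exact HKm]. }
  assert (Htwice : Cmod a / P * X * 2 <= Rabs m ^ S d * Cmod a).
  { pose proof (pow_lt 2 (S d) ltac:(lra)).
    replace P with (2 * 2 ^ S d) by (unfold P; simpl; ring).
    replace (Cmod a / (2 * 2 ^ S d) * X * 2) with (Cmod a * (X / 2 ^ S d)) by (field; lra).
    rewrite Rmult_comm. apply Rmult_le_compat_r; [lra|].
    apply Rmult_le_reg_l with (2 ^ S d); [lra|].
    replace (2 ^ S d * (X / 2 ^ S d)) with X by (field; lra). lra. }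
  set (lo := peval (firstn (S d) Q) (im m)) in *.
  set (hi := Cmult (Cpow (im m) (S d)) a) in *.
  pose proof (Cmod_triangle (Cplus lo hi) (Copp lo)) as T.
  replace (Cplus (Cplus lo hi) (Copp lo)) with hi in T by ring.
  rewrite Cmod_opp in T. lra.
Qed.

Lemma peval_im_lower_far Q d : has_deg Q d ->
  exists c M, 0 < c /\ forall m, M < Rabs m -> c * (1 + Rabs m) ^ d <= Cmod (peval Q (im m)).
Proof.
  destruct d as [|d]; [|apply peval_im_lower_far_S]. intros [Hnz Hz].
  exists (Cmod (nth 0 Q (RtoC 0))), 0. split; [apply Cmod_gt_0; auto|].
  intros m _. rewrite (peval_const Q); [simpl; lra | intros i Hi; apply Hz; lia].
Qed.

Lemma peval_im_lower Q d : has_deg Q d -> (forall m, peval Q (im m) <> RtoC 0) ->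
  exists c, 0 < c /\ forall m, c * (1 + Rabs m) ^ d <= Cmod (peval Q (im m)).
Proof.
  intros Hd HQ. destruct (peval_im_lower_far Q d Hd) as [c1 [M [Hc1 Hfar]]].
  set (M' := Rmax M 0). assert (HM' : M <= M' /\ 0 <= M') by (split; [apply Rmax_l | apply Rmax_r]).
  assert (Hcont : forall x, continuity_pt (fun m => Cmod (peval Q (im m))) x).
  { intros x. apply continuity_pt_filterlim.
    apply (continuous_comp (fun m => peval Q (im m)) (fun z => Cmod z));
      [apply Ccont_peval_im | apply (filterlim_norm (V := C_NormedModule))]. }
  destruct (continuity_ab_min (fun m => Cmod (peval Q (im m))) (- M') M' ltac:(lra)
     (fun x _ => Hcont x)) as [mx [Hmx _]].
  set (mn := Cmod (peval Q (im mx))). assert (Hmn : 0 < mn) by (apply Cmod_gt_0; auto).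
  set (B := (1 + M') ^ d). assert (HB : 0 < B) by (apply pow_lt; lra).
  exists (Rmin c1 (mn / B)). split; [apply Rmin_pos; [lra | apply Rdiv_lt_0_compat; auto]|].
  intros m. set (X := (1 + Rabs m) ^ d).
  assert (HX : 0 < X) by (apply pow_lt; pose proof (Rabs_pos m); lra).
  destruct (Rle_dec (Rabs m) M') as [Hm|Hm].
  - apply Rle_trans with (mn / B * X); [apply Rmult_le_compat_r; [lra | apply Rmin_r]|].
    assert (X <= B) by (apply pow_incr; pose proof (Rabs_pos m); lra).
    apply Rle_trans with mn.
    + unfold Rdiv. rewrite Rmult_assoc. rewrite <- (Rmult_1_r mn) at 2.
      apply Rmult_le_compat_l; [lra|]. apply Rmult_le_reg_l with B; auto.
      rewrite <- Rmult_assoc, Rinv_r, Rmult_1_l, Rmult_1_r by lra. auto.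
    + apply Hmx. pose proof (Rabs_maj2 m); pose proof (Rle_abs m); lra.
  - apply Rle_trans with (c1 * X); [apply Rmult_le_compat_r; [lra | apply Rmin_l]|].
    apply Hfar. lra.
Qed.

Lemma peval_im_ratio_bounded P degP Q degQ : deg_le P degP -> (degP <= degQ)%nat ->
  has_deg Q degQ -> (forall m, peval Q (im m) <> RtoC 0) ->
  exists K, forall m, Cmod (Cmult (peval P (im m)) (Cinv (peval Q (im m)))) <= K.
Proof.
  intros HP HPQ HQ HQnz.
  destruct (peval_im_upper P degP HP) as [KP [HKP HKPb]].
  destruct (peval_im_lower Q degQ HQ HQnz) as [cQ [HcQ HcQb]].
  exists (KP / cQ). intros m. rewrite Cmod_mult, Cmod_inv by auto.
  specialize (HKPb m). specialize (HcQb m).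
  set (c := 1 + Rabs m) in *. assert (Hc : 1 <= c) by (unfold c; pose proof (Rabs_pos m); lra).
  assert (Hcd : c ^ degP <= c ^ degQ) by (apply Rle_pow; auto).
  assert (Hcp : 0 < c ^ degP) by (apply pow_lt; lra).
  assert (HQm : 0 < Cmod (peval Q (im m))) by (apply Cmod_gt_0; auto).
  apply Rle_trans with (KP * c ^ degP / (cQ * c ^ degP)).
  - unfold Rdiv.
    apply Rmult_le_compat; auto; [apply Cmod_ge_0 | left; apply Rinv_0_lt_compat; auto|].
    apply Rinv_le_contravar; [apply Rmult_lt_0_compat; auto|].
    eapply Rle_trans; [| exact HcQb]. apply Rmult_le_compat_l; lra.
  - right. field. lra.
Qed.

(** * The space [E_(beta,mu)] *)

Lemma weight_gt_0 beta mu m : 0 < weight beta mu m.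
Proof. apply Rmult_lt_0_compat; [apply Rpower_gt_0 | apply exp_pos]. Qed.

Lemma weight_ge_1 beta mu m : 0 <= beta -> 0 <= mu -> 1 <= weight beta mu m.
Proof.
  intros Hb Hm. pose proof (Rabs_pos m). unfold weight. apply Rle_trans with (1 * 1); [lra|].
  apply Rmult_le_compat; try lra.
  - assert (H1 : Rpower (1 + Rabs m) 0 <= Rpower (1 + Rabs m) mu) by (apply Rle_Rpower; lra).
    rewrite Rpower_O in H1 by lra. exact H1.
  - rewrite <- exp_0. apply exp_le_compat. nra.
Qed.

Section WeightedNorm.
Variables beta mu : R.
Notation wt := (weight beta mu).
Notation wn := (wnorm_le beta mu).
Notation E := (inE beta mu).

Lemma wnorm_ge_0 f M : wn f M -> 0 <= M.
Proof.
  intros H. specialize (H 0). pose proof (weight_gt_0 beta mu 0). pose proof (Cmod_ge_0 (f 0)).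
  nra.
Qed.

Lemma wnorm_Cmod_le f M m : wn f M -> Cmod (f m) <= M / wt m.
Proof.
  intros H. specialize (H m). pose proof (weight_gt_0 beta mu m).
  apply Rmult_le_reg_l with (wt m); [lra|]. field_simplify; lra.
Qed.

Lemma wnorm_le_trans f M M' : M <= M' -> wn f M -> wn f M'.
Proof. intros H Hf m. specialize (Hf m). lra. Qed.

Lemma wnorm_ext f g M : (forall m, f m = g m) -> wn g M -> wn f M.
Proof. intros H Hg m. rewrite H. apply Hg. Qed.

Lemma wnorm_plus f g M1 M2 : wn f M1 -> wn g M2 -> wn (fun m => Cplus (f m) (g m)) (M1 + M2).
Proof.
  intros Hf Hg m. specialize (Hf m); specialize (Hg m).
  pose proof (weight_gt_0 beta mu m). pose proof (Cmod_triangle (f m) (g m)). nra.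
Qed.

Lemma wnorm_mult_bounded (M : R -> C) K f Mf : (forall m, Cmod (M m) <= K) -> wn f Mf ->
  wn (fun m => Cmult (M m) (f m)) (K * Mf).
Proof.
  intros HM Hf m. specialize (Hf m). specialize (HM m). rewrite Cmod_mult.
  pose proof (weight_gt_0 beta mu m). pose proof (Cmod_ge_0 (f m)). pose proof (Cmod_ge_0 (M m)).
  assert (0 <= wt m * Cmod (f m)) by nra.
  replace (wt m * (Cmod (M m) * Cmod (f m))) with (Cmod (M m) * (wt m * Cmod (f m))) by ring.
  apply Rle_trans with (Cmod (M m) * Mf); [apply Rmult_le_compat_l | apply Rmult_le_compat_r];
    lra.
Qed.

Lemma wnorm_scal c f Mf : wn f Mf -> wn (fun m => Cmult c (f m)) (Cmod c * Mf).
Proof. apply (wnorm_mult_bounded (fun _ => c)). intros; lra. Qed.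

Lemma inE_plus f g : E f -> E g -> E (fun m => Cplus (f m) (g m)).
Proof.
  intros [cf [Mf Hf]] [cg [Mg Hg]]. split; [|exists (Mf + Mg); apply wnorm_plus; auto].
  intros x. apply (continuous_plus (V := C_NormedModule)); auto.
Qed.

Lemma inE_mult_bounded (M : R -> C) K f : Ccont M -> (forall m, Cmod (M m) <= K) -> E f ->
  E (fun m => Cmult (M m) (f m)).
Proof.
  intros cM HM [cf [Mf Hf]]. split; [intros x; apply continuous_Cmult; auto|].
  exists (K * Mf). apply wnorm_mult_bounded; auto.
Qed.

Lemma inE_scal c f : E f -> E (fun m => Cmult c (f m)).
Proof.
  apply (inE_mult_bounded (fun _ => c) (Cmod c)); [intros x; apply continuous_const | intros; lra].
Qed.

Lemma inE_ext f g : (forall m, f m = g m) -> E g -> E f.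
Proof. intros H Hg. replace f with g; [exact Hg | apply functional_extensionality; auto]. Qed.

Lemma inE_lin2 c1 c2 f1 f2 : E f1 -> E f2 ->
  E (fun m => Cplus (Cmult c1 (f1 m)) (Cmult c2 (f2 m))).
Proof. intros; apply inE_plus; apply inE_scal; auto. Qed.

Lemma inE_minus f g : E f -> E g -> E (fun m => Cminus (f m) (g m)).
Proof.
  intros Hf Hg.
  apply inE_ext with (fun m => Cplus (Cmult (RtoC 1) (f m)) (Cmult (Copp (RtoC 1)) (g m))).
  - intros m. ring.
  - apply inE_lin2; auto.
Qed.

Lemma inE_diff_quotient f1 f0 f' z : E f1 -> E f0 -> E f' ->
  E (fun m => Cminus (Cdiv (Cminus (f1 m) (f0 m)) z) (f' m)).
Proof.
  intros H1 H0 H'. apply inE_minus; [|exact H'].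
  apply inE_ext with (fun m => Cmult (Cinv z) (Cminus (f1 m) (f0 m))).
  - intros m. unfold Cdiv. ring.
  - apply inE_scal, inE_minus; auto.
Qed.

Lemma inE_zero : E (fun _ => RtoC 0).
Proof.
  split; [intros x; apply continuous_const|]. exists 0. intros m. rewrite Cmod_0. lra.
Qed.

End WeightedNorm.

Section Holomorphy.
Variables beta mu eps0 : R.
Notation holo := (holoE beta mu eps0).
Notation E := (inE beta mu).
Notation wn := (wnorm_le beta mu).

Lemma holoE_ext f g : (forall eps m, f eps m = g eps m) -> holo g -> holo f.
Proof.
  intros H Hg. replace f with g; [exact Hg|].
  apply functional_extensionality; intros e; apply functional_extensionality; intros m; auto.
Qed.

Lemma holoE_zero : holo (fun _ _ => RtoC 0).
Proof.
  intros e He. split; [apply inE_zero|]. exists (fun _ => RtoC 0). split; [apply inE_zero|].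
  intros eta Heta. exists 1. split; [lra|]. intros z Hz _ m.
  replace (Cminus (Cdiv (Cminus (RtoC 0) (RtoC 0)) z) (RtoC 0)) with (RtoC 0) by (field; auto).
  rewrite Cmod_0. pose proof (weight_gt_0 beta mu m). lra.
Qed.

Lemma holoE_plus f g : holo f -> holo g -> holo (fun e m => Cplus (f e m) (g e m)).
Proof.
  intros Hf Hg e He.
  destruct (Hf e He) as [Ef [f' [Ef' Df]]], (Hg e He) as [Eg [g' [Eg' Dg]]].
  split; [apply inE_plus; auto|].
  exists (fun m => Cplus (f' m) (g' m)). split; [apply inE_plus; auto|].
  intros eta Heta. destruct (Df (eta / 2) ltac:(lra)) as [d1 [Hd1 H1]].
  destruct (Dg (eta / 2) ltac:(lra)) as [d2 [Hd2 H2]].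
  exists (Rmin d1 d2). split; [apply Rmin_pos; auto|]. intros z Hz [Hz1 Hz2]%Rmin_lt_inv.
  replace eta with (eta / 2 + eta / 2) by field.
  eapply wnorm_ext; [| apply wnorm_plus; [apply (H1 z) | apply (H2 z)]; auto].
  intros m. cbv beta. field. exact Hz.
Qed.

Lemma holoE_mult_bounded (M : R -> C) K f : Ccont M -> (forall m, Cmod (M m) <= K) -> holo f ->
  holo (fun e m => Cmult (M m) (f e m)).
Proof.
  intros cM HM Hf e He. destruct (Hf e He) as [Ef [f' [Ef' Df]]].
  assert (HK : 0 <= K) by (pose proof (HM 0); pose proof (Cmod_ge_0 (M 0)); lra).
  split; [apply (inE_mult_bounded beta mu M K); auto|].
  exists (fun m => Cmult (M m) (f' m)). split; [apply (inE_mult_bounded beta mu M K); auto|].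
  intros eta Heta.
  destruct (Df (eta / (K + 1)) ltac:(apply Rdiv_lt_0_compat; lra)) as [d1 [Hd1 H1]].
  exists d1. split; [exact Hd1|]. intros z Hz Hzd.
  apply (wnorm_le_trans beta mu _ (K * (eta / (K + 1)))).
  { apply Rle_trans with ((K + 1) * (eta / (K + 1))); [|right; field; lra].
    apply Rmult_le_compat_r; [left; apply Rdiv_lt_0_compat|]; lra. }
  eapply wnorm_ext; [| apply (wnorm_mult_bounded beta mu M K); [exact HM | apply (H1 z); auto]].
  intros m. cbv beta. field. exact Hz.
Qed.

Lemma holoE_scal c f : holo f -> holo (fun e m => Cmult c (f e m)).
Proof.
  apply (holoE_mult_bounded (fun _ => c) (Cmod c));
    [intros x; apply continuous_const | intros; lra].
Qed.

Lemma holoE_mult_eps f : holo f -> holo (fun e m => Cmult e (f e m)).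
Proof.
  intros Hf e He. destruct (Hf e He) as [Ef [f' [Ef' Df]]].
  split; [apply inE_scal; auto|].
  exists (fun m => Cplus (f e m) (Cmult e (f' m))).
  split; [apply inE_plus; [| apply inE_scal]; auto|].
  destruct Ef' as [_ [Mf Hmf]]. pose proof (wnorm_ge_0 beta mu _ _ Hmf) as HMf.
  pose proof (Cmod_ge_0 e) as He0.
  intros eta Heta. set (r1 := eta / (2 * (Cmod e + 2))). set (r2 := eta / (2 * (Mf + 1))).
  assert (Hr1 : 0 < r1) by (apply Rdiv_lt_0_compat; lra).
  assert (Hr2 : 0 < r2) by (apply Rdiv_lt_0_compat; lra).
  destruct (Df r1 Hr1) as [d1 [Hd1 H1]].
  exists (Rmin (Rmin d1 1) r2). split; [apply Rmin_pos; [apply Rmin_pos|]; lra|].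
  intros z Hz [[Hz1 Hz2]%Rmin_lt_inv Hz3]%Rmin_lt_inv.
  apply (wnorm_le_trans beta mu _ (Cmod (Cplus e z) * r1 + Cmod z * Mf)).
  { pose proof (Cmod_triangle e z). pose proof (Cmod_ge_0 z).
    assert (Cmod (Cplus e z) * r1 <= (Cmod e + 2) * r1) by (apply Rmult_le_compat_r; lra).
    assert ((Cmod e + 2) * r1 = eta / 2) by (unfold r1; field; lra).
    assert (Cmod z * Mf <= r2 * (Mf + 1)) by nra.
    assert (r2 * (Mf + 1) = eta / 2) by (unfold r2; field; lra).
    lra. }
  eapply wnorm_ext; [| apply wnorm_plus; apply wnorm_scal; [apply (H1 z); auto | exact Hmf]].
  intros m. cbv beta. field. exact Hz.
Qed.

Lemma holoE_Cpow k f : holo f -> holo (fun e m => Cmult (Cpow e k) (f e m)).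
Proof.
  intros Hf. induction k as [|k IH].
  - apply holoE_ext with f; auto. intros e m. unfold Cpow; simpl. change one with (RtoC 1). ring.
  - apply holoE_ext with (fun e m => Cmult e (Cmult (Cpow e k) (f e m)));
      [|apply holoE_mult_eps; auto].
    intros e m. unfold Cpow; simpl. change mult with Cmult. ring.
Qed.

Lemma holoE_sum_n_m (F : nat -> C -> R -> C) a b :
  (forall l, (a <= l <= b)%nat -> holo (F l)) -> holo (fun e m => sum_n_m (fun l => F l e m) a b).
Proof.
  induction b as [|b IH]; intros H.
  - destruct a as [|a].
    + apply holoE_ext with (F 0%nat); [intros; rewrite sum_n_n; reflexivity | apply H; lia].
    + apply holoE_ext with (fun _ _ => RtoC 0);
        [intros; rewrite sum_n_m_zero by lia; reflexivity | apply holoE_zero].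
  - destruct (Compare_dec.le_lt_dec a (S b)) as [Hab|Hab].
    + apply holoE_ext with (fun e m => Cplus (sum_n_m (fun l => F l e m) a b) (F (S b) e m));
        [intros; rewrite sum_n_Sm by lia; reflexivity|].
      apply holoE_plus; [apply IH; intros; apply H | apply H]; lia.
    + apply holoE_ext with (fun _ _ => RtoC 0);
        [intros; rewrite sum_n_m_zero by lia; reflexivity | apply holoE_zero].
Qed.

Lemma holoE_sum_n (F : nat -> C -> R -> C) b :
  (forall l, (l <= b)%nat -> holo (F l)) -> holo (fun e m => sum_n (fun l => F l e m) b).
Proof. intros H. apply holoE_sum_n_m. intros; apply H; lia. Qed.

Lemma holoE_increment_le f e : holo f -> in_disc eps0 e ->
  exists K d, 0 <= K /\ 0 < d /\ forall z, Cmod z < d ->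
    wn (fun m => Cminus (f (Cplus e z) m) (f e m)) (Cmod z * K).
Proof.
  intros Hf He. destruct (Hf e He) as [Ef [f' [[_ [Mf Hmf]] Df]]].
  pose proof (wnorm_ge_0 beta mu _ _ Hmf).
  destruct (Df 1 ltac:(lra)) as [d [Hd H1]].
  exists (1 + Mf), d. split; [lra|]. split; [exact Hd|]. intros z Hz.
  destruct (Ceq_dec z (RtoC 0)) as [-> | Hz0].
  - rewrite Cmod_0. intros m. replace (Cplus e (RtoC 0)) with e by ring.
    replace (Cminus (f e m) (f e m)) with (RtoC 0) by ring. rewrite Cmod_0. lra.
  - eapply wnorm_ext; [| apply wnorm_scal, wnorm_plus; [apply (H1 z); auto | exact Hmf]].
    intros m. cbv beta. field. exact Hz0.
Qed.

End Holomorphy.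

(** * Bounded bilinear maps preserve holomorphy *)

Lemma bilinear_error_budget C0 a0 a' b0 CB eta :
  0 <= C0 -> 0 <= a0 -> 0 <= a' -> 0 <= b0 -> 0 <= CB -> 0 < eta ->
  exists etaA etaB r, 0 < etaA /\ 0 < etaB /\ 0 < r /\ forall t, 0 <= t < r ->
    C0 * etaA * (b0 + t * CB) + C0 * a' * (t * CB) + C0 * a0 * etaB <= eta.
Proof.
  intros HC0 Ha0 Ha' Hb0 HCB Heta. set (K := C0 + 1).
  assert (HK : 0 < K /\ C0 <= K) by (unfold K; lra). assert (0 <= a' * CB) by nra.
  exists (eta / (3 * K * (b0 + CB + 1))), (eta / (3 * K * (a0 + 1))),
    (Rmin 1 (eta / (3 * K * (a' * CB + 1)))).
  assert (Hpos : forall x, 0 < x -> 0 < eta / (3 * K * x))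
    by (intros; apply Rdiv_lt_0_compat; [| repeat apply Rmult_lt_0_compat]; lra).
  split; [apply Hpos; lra|]. split; [apply Hpos; lra|].
  split; [apply Rmin_pos; [lra | apply Hpos; lra]|].
  intros t [Ht0 Ht]. apply Rmin_lt_inv in Ht as [Ht1 Htr].
  assert (B1 : C0 * (eta / (3 * K * (b0 + CB + 1))) * (b0 + t * CB) <= eta / 3).
  { apply Rle_trans with (K * (eta / (3 * K * (b0 + CB + 1))) * (b0 + CB + 1)).
    - pose proof (Hpos (b0 + CB + 1) ltac:(lra)).
      apply Rmult_le_compat; nra.
    - right. field. split; lra. }
  assert (B2 : C0 * a' * (t * CB) <= eta / 3).
  { apply Rle_trans with (K * (a' * CB + 1) * (eta / (3 * K * (a' * CB + 1)))).
    - replace (C0 * a' * (t * CB)) with (C0 * (a' * CB) * t) by ring.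
      apply Rmult_le_compat; nra.
    - right. field. split; lra. }
  assert (B3 : C0 * a0 * (eta / (3 * K * (a0 + 1))) <= eta / 3).
  { apply Rle_trans with (K * (a0 + 1) * (eta / (3 * K * (a0 + 1)))).
    - pose proof (Hpos (a0 + 1) ltac:(lra)). apply Rmult_le_compat_r; nra.
    - right. field. split; lra. }
  lra.
Qed.

Section BoundedBilinear.
Variables beta mu eps0 : R.
Notation holo := (holoE beta mu eps0).
Notation E := (inE beta mu).
Notation wn := (wnorm_le beta mu).

Variable T : (R -> C) -> (R -> C) -> R -> C.
Hypothesis T_inE : forall A B, E A -> E B -> E (T A B).
Hypothesis T_bounded : exists C0, 0 <= C0 /\
  forall A B a b, E A -> E B -> wn A a -> wn B b -> wn (T A B) (C0 * a * b).
Hypothesis T_linear_l : forall A A1 A2 B c1 c2, E A1 -> E A2 -> E B ->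
  (forall x, A x = Cplus (Cmult c1 (A1 x)) (Cmult c2 (A2 x))) ->
  forall m, T A B m = Cplus (Cmult c1 (T A1 B m)) (Cmult c2 (T A2 B m)).
Hypothesis T_linear_r : forall A B B1 B2 c1 c2, E A -> E B1 -> E B2 ->
  (forall x, B x = Cplus (Cmult c1 (B1 x)) (Cmult c2 (B2 x))) ->
  forall m, T A B m = Cplus (Cmult c1 (T A B1 m)) (Cmult c2 (T A B2 m)).

Lemma bilinear_diff_quotient A0 A1 A' B0 B1 B' z :
  E A0 -> E A1 -> E A' -> E B0 -> E B1 -> E B' -> z <> RtoC 0 -> forall m,
  Cminus (Cdiv (Cminus (T A1 B1 m) (T A0 B0 m)) z) (Cplus (T A' B0 m) (T A0 B' m)) =
  Cplus (Cplus (T (fun x => Cminus (Cdiv (Cminus (A1 x) (A0 x)) z) (A' x)) B1 m)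
               (T A' (fun x => Cminus (B1 x) (B0 x)) m))
        (T A0 (fun x => Cminus (Cdiv (Cminus (B1 x) (B0 x)) z) (B' x)) m).
Proof.
  intros EA0 EA1 EA' EB0 EB1 EB' Hz m.
  set (G1 := fun x => Cminus (Cdiv (Cminus (A1 x) (A0 x)) z) (A' x)).
  set (G2 := fun x => Cminus (Cdiv (Cminus (B1 x) (B0 x)) z) (B' x)).
  set (H1 := fun x => Cminus (B1 x) (B0 x)).
  set (G1' := fun x => Cplus (Cmult (Copp (Cinv z)) (A0 x)) (Cmult (Copp (RtoC 1)) (A' x))).
  set (G2' := fun x => Cplus (Cmult (Copp (Cinv z)) (B0 x)) (Cmult (Copp (RtoC 1)) (B' x))).
  assert (EG1' : E G1') by (apply inE_lin2; auto).
  assert (EG2' : E G2') by (apply inE_lin2; auto).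
  rewrite (T_linear_l G1 A1 G1' B1 (Cinv z) (RtoC 1))
    by (auto; intros x; unfold G1, G1'; field; auto).
  rewrite (T_linear_l G1' A0 A' B1 (Copp (Cinv z)) (Copp (RtoC 1))) by (auto; reflexivity).
  rewrite (T_linear_r A' H1 B1 B0 (RtoC 1) (Copp (RtoC 1))) by (auto; intros x; unfold H1; ring).
  rewrite (T_linear_r A0 G2 B1 G2' (Cinv z) (RtoC 1))
    by (auto; intros x; unfold G2, G2'; field; auto).
  rewrite (T_linear_r A0 G2' B0 B' (Copp (Cinv z)) (Copp (RtoC 1))) by (auto; reflexivity).
  field. exact Hz.
Qed.

Lemma holoE_bilinear A B : holo A -> holo B -> holo (fun e => T (A e) (B e)).
Proof.
  intros HA HB e He.
  destruct (HA e He) as [EA0 [A' [EA' DA]]], (HB e He) as [EB0 [B' [EB' DB]]].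
  split; [apply T_inE; auto|].
  exists (fun m => Cplus (T A' (B e) m) (T (A e) B' m)).
  split; [apply inE_plus; apply T_inE; auto|].
  intros eta Heta.
  destruct T_bounded as [C0 [HC0 HT]].
  pose proof EA0 as [_ [a0 Ha0]]. pose proof EA' as [_ [a' Ha']]. pose proof EB0 as [_ [b0 Hb0]].
  destruct (holoE_increment_le beta mu eps0 B e HB He) as [CB [dBd [HCB [HdBd HBd]]]].
  destruct (bilinear_error_budget C0 a0 a' b0 CB eta HC0 (wnorm_ge_0 beta mu _ _ Ha0)
    (wnorm_ge_0 beta mu _ _ Ha') (wnorm_ge_0 beta mu _ _ Hb0) HCB Heta)
    as [etaA [etaB [r [HetaA [HetaB [Hr Hbudget]]]]]].
  destruct (DA etaA HetaA) as [dA [HdA HDA]], (DB etaB HetaB) as [dB [HdB HDB]].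
  assert (He0 : 0 < eps0 - Cmod e) by (unfold in_disc in He; lra).
  exists (Rmin (Rmin dA dB) (Rmin (Rmin dBd r) (eps0 - Cmod e))).
  split; [repeat apply Rmin_pos; lra|]. intros z Hz0 Hz.
  apply Rmin_lt_inv in Hz as [[HzA HzB]%Rmin_lt_inv [[HzBd Hzr]%Rmin_lt_inv Hze]%Rmin_lt_inv].
  assert (Hdisc : in_disc eps0 (Cplus e z))
    by (unfold in_disc; pose proof (Cmod_triangle e z); lra).
  destruct (HA _ Hdisc) as [EA1 _], (HB _ Hdisc) as [EB1 _].
  eapply wnorm_ext; [apply bilinear_diff_quotient; auto|].
  assert (NB1 : wn (B (Cplus e z)) (b0 + Cmod z * CB)).
  { eapply wnorm_ext; [| apply wnorm_plus; [exact Hb0 | exact (HBd z HzBd)]].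
    intros m. cbv beta. ring. }
  pose proof (HT _ _ _ _ (inE_diff_quotient _ _ _ _ _ z EA1 EA0 EA') EB1 (HDA z Hz0 HzA) NB1) as T1.
  pose proof (HT _ _ _ _ EA' (inE_minus _ _ _ _ EB1 EB0) Ha' (HBd z HzBd)) as T2.
  pose proof (HT _ _ _ _ EA0 (inE_diff_quotient _ _ _ _ _ z EB1 EB0 EB') Ha0 (HDB z Hz0 HzB)) as T3.
  eapply wnorm_le_trans; [| apply wnorm_plus; [apply wnorm_plus; [exact T1 | exact T2] | exact T3]].
  apply Hbudget. pose proof (Cmod_ge_0 z). lra.
Qed.

End BoundedBilinear.

(** * The convolution operator *)

Lemma weight_exp beta mu m : weight beta mu m = exp (mu * ln (1 + Rabs m) + beta * Rabs m).
Proof. unfold weight, Rpower. rewrite exp_plus. reflexivity. Qed.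

Lemma pow_exp x n : 0 < x -> x ^ n = exp (INR n * ln x).
Proof. intros H. rewrite <- Rpower_pow by auto. reflexivity. Qed.

Lemma decay_le_1 s x : 0 <= s -> decay s x <= 1.
Proof.
  intros Hs. pose proof (Rabs_pos x).
  assert (0 <= ln (1 + Rabs x)) by (rewrite <- ln_1; apply ln_le; lra).
  rewrite <- exp_0. apply exp_le_compat. nra.
Qed.

Lemma pow_div_weight_le_decay beta mu d x : 0 <= beta ->
  (1 + Rabs x) ^ d / weight beta mu x <= decay (mu - INR d) x.
Proof.
  intros Hb. pose proof (Rabs_pos x).
  rewrite weight_exp, pow_exp by lra. unfold Rdiv, decay, Rpower.
  rewrite <- exp_Ropp, <- exp_plus. apply exp_le_compat. nra.
Qed.

(* Either [1 + |m1| >= (1 + |m|) / 2] or [1 + |m - m1| >= (1 + |m|) / 2]. *)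
Lemma weight_conv_le beta mu d m m1 : 0 <= beta -> INR d <= mu ->
  weight beta mu m * (1 + Rabs m1) ^ d / (weight beta mu (m - m1) * weight beta mu m1) <=
  Rpower 2 mu * (1 + Rabs m) ^ d * (decay mu (m1 - m) + decay (mu - INR d) m1).
Proof.
  intros Hb Hmu.
  pose proof (Rabs_pos m). pose proof (Rabs_pos m1). pose proof (Rabs_pos (m - m1)).
  pose proof (pos_INR d).
  rewrite !weight_exp. unfold decay. rewrite (Rabs_minus_sym m1 m).
  set (c := 1 + Rabs m). set (A := 1 + Rabs (m - m1)). set (B := 1 + Rabs m1).
  assert (Hlc : 0 <= ln c) by (rewrite <- ln_1; apply ln_le; unfold c; lra).
  assert (Hl2 : 0 < ln 2) by (pose proof ln_lt_2; lra).
  rewrite (pow_exp B), (pow_exp c) by (unfold B, c; lra). unfold Rpower.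
  assert (Hfrac : forall a b c d, exp a * exp b / (exp c * exp d) = exp (a + b - c - d)).
  { intros. unfold Rminus. rewrite !exp_plus, !exp_Ropp. field.
    split; apply Rgt_not_eq, exp_pos. }
  rewrite Hfrac.
  rewrite Rmult_plus_distr_l, <- !exp_plus.
  assert (Eb : beta * Rabs m <= beta * Rabs (m - m1) + beta * Rabs m1).
  { rewrite <- Rmult_plus_distr_l. apply Rmult_le_compat_l; [lra|].
    replace m with ((m - m1) + m1) at 1 by ring. apply Rabs_triang. }
  destruct (Rle_dec (ln c - ln 2) (ln B)) as [Hcase|Hcase].
  - apply Rle_trans with (exp (mu * ln 2 + INR d * ln c + - mu * ln A));
      [apply exp_le_compat |
       pose proof (exp_pos (mu * ln 2 + INR d * ln c + - (mu - INR d) * ln B)); lra].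
    assert ((mu - INR d) * (ln c - ln 2) <= (mu - INR d) * ln B) by (apply Rmult_le_compat_l; lra).
    nra.
  - assert (HBc : B < c / 2) by (apply ln_lt_inv; unfold B, c in *; try lra; rewrite ln_div; lra).
    assert (HlA : ln c - ln 2 <= ln A).
    { rewrite <- ln_div by (unfold c; lra). apply ln_le; [unfold c; lra|].
      unfold A, c. unfold B, c in HBc. pose proof (Rabs_triang_inv m m1). lra. }
    apply Rle_trans with (exp (mu * ln 2 + INR d * ln c + - (mu - INR d) * ln B));
      [apply exp_le_compat | pose proof (exp_pos (mu * ln 2 + INR d * ln c + - mu * ln A)); lra].
    assert (mu * (ln c - ln 2) <= mu * ln A) by (apply Rmult_le_compat_l; lra).
    assert (0 <= INR d * ln c) by (apply Rmult_le_pos; lra).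
    assert (0 <= ln B) by (rewrite <- ln_1; apply ln_le; unfold B; lra).
    nra.
Qed.

Definition conv_fun (Rl : list C) (A B : R -> C) (m : R) : R -> C :=
  fun m1 => Cmult (Cmult (A (m - m1)) (peval Rl (im m1))) (B m1).

Definition conv_op (Q Rl : list C) (A B : R -> C) (m : R) : C :=
  Cmult (Cinv (peval Q (im m))) (CRInt_line (conv_fun Rl A B m)).

Lemma Ccont_conv_fun Rl A B m : Ccont A -> Ccont B -> Ccont (conv_fun Rl A B m).
Proof.
  intros HA HB x. unfold conv_fun.
  apply continuous_Cmult; [apply continuous_Cmult; [| apply Ccont_peval_im] | apply HB].
  apply (continuous_comp (fun m1 : R => m - m1) A x); [| apply HA].
  apply (continuous_minus (V := R_NormedModule)); [apply continuous_const | apply continuous_id].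
Qed.

Section Convolution.
Variables (beta mu : R) (degR : nat) (Rl : list C).
Hypothesis Hbeta : 0 <= beta.
Hypothesis HmuR : INR degR + 1 < mu.
Hypothesis HRl : deg_le Rl degR.

Notation wt := (weight beta mu).
Notation wn := (wnorm_le beta mu).
Notation E := (inE beta mu).
Let nu := mu - INR degR.

Let Hnu : 1 < nu.
Proof. unfold nu; lra. Qed.

Let Hmu : 1 < mu.
Proof. pose proof (pos_INR degR); lra. Qed.

Lemma conv_fun_Cmod_le KR A B a b m m1 :
  (forall m, Cmod (peval Rl (im m)) <= KR * (1 + Rabs m) ^ degR) -> wn A a -> wn B b ->
  Cmod (conv_fun Rl A B m m1) <= a * KR * b * ((1 + Rabs m1) ^ degR / (wt (m - m1) * wt m1)).
Proof.
  intros HK HA HB. unfold conv_fun. rewrite !Cmod_mult.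
  pose proof (wnorm_Cmod_le beta mu A a (m - m1) HA).
  pose proof (wnorm_Cmod_le beta mu B b m1 HB). pose proof (HK m1).
  pose proof (weight_gt_0 beta mu (m - m1)). pose proof (weight_gt_0 beta mu m1).
  pose proof (Cmod_ge_0 (A (m - m1))). pose proof (Cmod_ge_0 (B m1)).
  pose proof (Cmod_ge_0 (peval Rl (im m1))).
  apply Rle_trans with ((a / wt (m - m1)) * (KR * (1 + Rabs m1) ^ degR) * (b / wt m1)).
  - apply Rmult_le_compat; try apply Rmult_le_pos; auto. apply Rmult_le_compat; auto.
  - right. field. split; lra.
Qed.

Lemma conv_fun_dominated KR A B a b m : 0 <= KR ->
  (forall m, Cmod (peval Rl (im m)) <= KR * (1 + Rabs m) ^ degR) ->
  Ccont A -> Ccont B -> wn A a -> wn B b -> dominated (conv_fun Rl A B m) (a * KR * b) nu.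
Proof.
  intros HK0 HK cA cB HA HB.
  pose proof (wnorm_ge_0 beta mu A a HA). pose proof (wnorm_ge_0 beta mu B b HB).
  split; [apply Ccont_conv_fun; auto|]. split; [exact Hnu|].
  split; [apply Rmult_le_pos; [apply Rmult_le_pos|]; auto|].
  intros m1. eapply Rle_trans; [apply (conv_fun_Cmod_le KR A B a b m m1 HK HA HB)|].
  apply Rmult_le_compat_l; [apply Rmult_le_pos; [apply Rmult_le_pos|]; auto|].
  pose proof (weight_ge_1 beta mu (m - m1) Hbeta ltac:(lra)). pose proof (Rabs_pos m1).
  pose proof (weight_gt_0 beta mu m1).
  apply Rle_trans with ((1 + Rabs m1) ^ degR / wt m1); [|apply pow_div_weight_le_decay; auto].
  unfold Rdiv. apply Rmult_le_compat_l; [apply pow_le; lra|].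
  apply Rinv_le_contravar; nra.
Qed.

Lemma ex_RInt_gen_conv_fun A B m : E A -> E B ->
  ex_RInt_gen (V := CV) (conv_fun Rl A B m) (Rbar_locally m_infty) (Rbar_locally p_infty).
Proof.
  intros [cA [a HA]] [cB [b HB]].
  destruct (peval_im_upper Rl degR HRl) as [KR [HK0 HK]].
  eapply ex_RInt_gen_dominated, conv_fun_dominated; eauto.
Qed.

Lemma conv_fun_Cmod_le_decay KR A B a b m m1 : 0 <= KR ->
  (forall m, Cmod (peval Rl (im m)) <= KR * (1 + Rabs m) ^ degR) -> wn A a -> wn B b ->
  Cmod (conv_fun Rl A B m m1) <=
  a * KR * b * Rpower 2 mu * ((1 + Rabs m) ^ degR / wt m) * (decay mu (m1 - m) + decay nu m1).
Proof.
  intros HK0 HK HA HB.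
  pose proof (wnorm_ge_0 beta mu A a HA). pose proof (wnorm_ge_0 beta mu B b HB).
  pose proof (weight_gt_0 beta mu m).
  eapply Rle_trans; [apply (conv_fun_Cmod_le KR A B a b m m1 HK HA HB)|].
  pose proof (weight_conv_le beta mu degR m m1 Hbeta ltac:(lra)) as Hk. fold nu in Hk.
  apply Rle_trans with (a * KR * b * (Rpower 2 mu * (1 + Rabs m) ^ degR *
                          (decay mu (m1 - m) + decay nu m1) / wt m)).
  - apply Rmult_le_compat_l; [repeat apply Rmult_le_pos; lra|].
    apply Rmult_le_reg_l with (wt m); [lra|].
    replace (wt m * (Rpower 2 mu * (1 + Rabs m) ^ degR * (decay mu (m1 - m) + decay nu m1) / wt m))
      with (Rpower 2 mu * (1 + Rabs m) ^ degR * (decay mu (m1 - m) + decay nu m1)) by (field; lra).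
    eapply Rle_trans; [| exact Hk]. right. unfold Rdiv. ring.
  - right. field. lra.
Qed.

Lemma CRInt_line_conv_fun_le : exists C1, 0 <= C1 /\ forall A B a b m,
  Ccont A -> Ccont B -> wn A a -> wn B b ->
  Cmod (CRInt_line (conv_fun Rl A B m)) <= C1 * a * b * ((1 + Rabs m) ^ degR / wt m).
Proof.
  destruct (peval_im_upper Rl degR HRl) as [KR [HK0 HK]].
  set (S := 2 / (mu - 1) + 2 / (nu - 1)).
  assert (HS : 0 <= S).
  { unfold S. assert (0 < 2 / (mu - 1)) by (apply Rdiv_lt_0_compat; lra).
    assert (0 < 2 / (nu - 1)) by (apply Rdiv_lt_0_compat; lra). lra. }
  pose proof (Rpower_gt_0 2 mu) as H2m.
  exists (KR * Rpower 2 mu * S). split; [apply Rmult_le_pos; [apply Rmult_le_pos|]; lra|].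
  intros A B a b m cA cB HA HB.
  pose proof (wnorm_ge_0 beta mu A a HA) as Ha. pose proof (wnorm_ge_0 beta mu B b HB) as Hb.
  pose proof (weight_gt_0 beta mu m) as Hwm. pose proof (Rabs_pos m) as Hm0.
  set (H := a * KR * b * Rpower 2 mu * ((1 + Rabs m) ^ degR / wt m)).
  assert (HH : 0 <= H).
  { unfold H. apply Rmult_le_pos; [repeat apply Rmult_le_pos; lra|].
    apply Rdiv_le_0_compat; [apply pow_le|]; lra. }
  replace (KR * Rpower 2 mu * S * a * b * ((1 + Rabs m) ^ degR / wt m)) with (H * S)
    by (unfold H; ring).
  apply (CRInt_line_norm_le _ (a * KR * b) nu); [apply conv_fun_dominated; auto|].
  intros a' b' Hab.
  destruct (RInt_decay_shift_le mu m a' b' Hmu Hab) as [l1 [Hl1 Hl1b]].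
  destruct (RInt_decay_le nu a' b' Hnu Hab) as [l2 [Hl2 Hl2b]].
  apply Rle_trans with (H * (l1 + l2)).
  - apply CRInt_norm_le with (g := fun x => H * (decay mu (x - m) + decay nu x));
      [exact Hab | apply Ccont_conv_fun; auto | intros; apply conv_fun_Cmod_le_decay; auto |].
    apply (is_RInt_scal (V := R_NormedModule)), (is_RInt_plus (V := R_NormedModule)); auto.
  - apply Rmult_le_compat_l; [exact HH | unfold S; lra].
Qed.

Lemma continuous_CRInt_line_conv_fun A B : E A -> E B ->
  Ccont (fun m => CRInt_line (conv_fun Rl A B m)).
Proof.
  intros [cA [a HA]] [cB [b HB]] m0.
  destruct (peval_im_upper Rl degR HRl) as [KR [HK0 HK]].
  pose proof (wnorm_ge_0 beta mu B b HB) as Hb.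
  apply (CRInt_line_continuous _ (a * KR * b) nu); [intros m; apply conv_fun_dominated; auto|].
  intros L e HL He.
  set (G := KR * b + 1). assert (HG : 0 < G) by (unfold G; nra).
  destruct (unifcont_normed_1d (V := C_NormedModule) A (m0 - L - 1) (m0 + L + 1)
     (fun x _ => cA x) (mkposreal (e / G) ltac:(apply Rdiv_lt_0_compat; lra))) as [dl Hdl].
  exists (Rmin dl 1). split; [apply Rmin_pos; [apply cond_pos | lra]|].
  intros m [Hm1 Hm2]%Rmin_lt_inv x Hx. apply Rabs_def2 in Hm2.
  assert (Hball : ball (m0 - x) dl (m - x)).
  { change (Rabs (minus (m - x) (m0 - x)) < dl). unfold minus, plus, opp; simpl.
    replace (m - x + - (m0 - x)) with (m - m0) by ring. exact Hm1. }
  specialize (Hdl (m0 - x) (m - x) ltac:(lra) ltac:(lra) Hball). simpl in Hdl.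
  unfold conv_fun.
  replace (Cminus (Cmult (Cmult (A (m - x)) (peval Rl (im x))) (B x))
                  (Cmult (Cmult (A (m0 - x)) (peval Rl (im x))) (B x)))
    with (Cmult (Cminus (A (m - x)) (A (m0 - x))) (Cmult (peval Rl (im x)) (B x))) by ring.
  rewrite !Cmod_mult.
  assert (HRB : Cmod (peval Rl (im x)) * Cmod (B x) <= G).
  { pose proof (HK x). pose proof (wnorm_Cmod_le beta mu B b x HB).
    pose proof (pow_div_weight_le_decay beta mu degR x Hbeta).
    pose proof (decay_le_1 (mu - INR degR) x ltac:(lra)).
    pose proof (weight_gt_0 beta mu x).
    pose proof (Cmod_ge_0 (B x)). pose proof (Cmod_ge_0 (peval Rl (im x))).
    apply Rle_trans with (KR * (1 + Rabs x) ^ degR * (b / wt x)); [apply Rmult_le_compat; auto|].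
    replace (KR * (1 + Rabs x) ^ degR * (b / wt x))
      with (KR * b * ((1 + Rabs x) ^ degR / wt x)) by (field; lra).
    unfold G. assert (0 <= KR * b) by nra. nra. }
  apply Rle_trans with (e / G * G); [| right; field; lra].
  apply Rmult_le_compat; [apply Cmod_ge_0 | apply Rmult_le_pos; apply Cmod_ge_0 | left; exact Hdl |
    exact HRB].
Qed.

Lemma conv_op_linear_l A A1 A2 B c1 c2 : E A1 -> E A2 -> E B ->
  (forall x, A x = Cplus (Cmult c1 (A1 x)) (Cmult c2 (A2 x))) ->
  forall Q m, conv_op Q Rl A B m =
    Cplus (Cmult c1 (conv_op Q Rl A1 B m)) (Cmult c2 (conv_op Q Rl A2 B m)).
Proof.
  intros E1 E2 EB HA Q m. unfold conv_op.
  replace (conv_fun Rl A B m)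
    with (fun x => Cplus (Cmult c1 (conv_fun Rl A1 B m x)) (Cmult c2 (conv_fun Rl A2 B m x)))
    by (apply functional_extensionality; intros x; unfold conv_fun; rewrite HA; ring).
  rewrite CRInt_line_lin by (apply ex_RInt_gen_conv_fun; auto). ring.
Qed.

Lemma conv_op_linear_r A B B1 B2 c1 c2 : E A -> E B1 -> E B2 ->
  (forall x, B x = Cplus (Cmult c1 (B1 x)) (Cmult c2 (B2 x))) ->
  forall Q m, conv_op Q Rl A B m =
    Cplus (Cmult c1 (conv_op Q Rl A B1 m)) (Cmult c2 (conv_op Q Rl A B2 m)).
Proof.
  intros EA E1 E2 HB Q m. unfold conv_op.
  replace (conv_fun Rl A B m)
    with (fun x => Cplus (Cmult c1 (conv_fun Rl A B1 m x)) (Cmult c2 (conv_fun Rl A B2 m x)))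
    by (apply functional_extensionality; intros x; unfold conv_fun; rewrite HB; ring).
  rewrite CRInt_line_lin by (apply ex_RInt_gen_conv_fun; auto). ring.
Qed.

Variables (Q : list C) (degQ : nat).
Hypothesis HQd : has_deg Q degQ.
Hypothesis HQR : (degR <= degQ)%nat.
Hypothesis HQnz : forall m, peval Q (im m) <> RtoC 0.

Lemma conv_op_bounded : exists C0, 0 <= C0 /\
  forall A B a b, E A -> E B -> wn A a -> wn B b -> wn (conv_op Q Rl A B) (C0 * a * b).
Proof.
  destruct CRInt_line_conv_fun_le as [C1 [HC1 HI]].
  destruct (peval_im_lower Q degQ HQd HQnz) as [cQ [HcQ HQl]].
  exists (C1 / cQ). split; [apply Rdiv_le_0_compat; lra|].
  intros A B a b [cA _] [cB _] HA HB m.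
  pose proof (wnorm_ge_0 beta mu A a HA). pose proof (wnorm_ge_0 beta mu B b HB).
  specialize (HI A B a b m cA cB HA HB). specialize (HQl m).
  set (c := 1 + Rabs m) in *. assert (Hc : 1 <= c) by (unfold c; pose proof (Rabs_pos m); lra).
  pose proof (weight_gt_0 beta mu m).
  assert (Hcp : 0 < c ^ degR) by (apply pow_lt; lra).
  assert (HQm : 0 < Cmod (peval Q (im m))) by (apply Cmod_gt_0; auto).
  assert (HQl' : cQ * c ^ degR <= Cmod (peval Q (im m))).
  { eapply Rle_trans; [| exact HQl]. apply Rmult_le_compat_l; [lra | apply Rle_pow; auto]. }
  unfold conv_op. rewrite Cmod_mult, Cmod_inv by auto.
  apply Rle_trans with (wt m * (/ (cQ * c ^ degR) * (C1 * a * b * (c ^ degR / wt m)))).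
  - apply Rmult_le_compat_l; [lra|]. apply Rmult_le_compat; auto;
      [left; apply Rinv_0_lt_compat; lra | apply Cmod_ge_0 | apply Rinv_le_contravar; nra].
  - right. field. repeat split; lra.
Qed.

Lemma conv_op_inE A B : E A -> E B -> E (conv_op Q Rl A B).
Proof.
  intros EA EB. destruct conv_op_bounded as [C0 [HC0 HT]].
  pose proof EA as [cA [a HA]]. pose proof EB as [cB [b HB]].
  split; [|exists (C0 * a * b); apply HT; auto].
  intros x. unfold conv_op. apply continuous_Cmult.
  - apply continuous_Cinv; [apply Ccont_peval_im | apply HQnz].
  - apply continuous_CRInt_line_conv_fun; auto.
Qed.

Lemma holoE_conv_op eps0 A B : holoE beta mu eps0 A -> holoE beta mu eps0 B ->
  holoE beta mu eps0 (fun e => conv_op Q Rl (A e) (B e)).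
Proof.
  apply holoE_bilinear.
  - exact conv_op_inE.
  - exact conv_op_bounded.
  - intros; apply conv_op_linear_l; auto.
  - intros; apply conv_op_linear_r; auto.
Qed.

End Convolution.

(** * The coefficient recursion *)

Section Recursion.
Variables (q : R) (k1 k2 D dD1 dD2 : nat) (d delta Delta : nat -> nat)
  (Q RD1 RD2 : list C) (Rl : nat -> list C) (p1 : nat).
Hypothesis Hq : q <> 0.
Hypothesis HQ : forall m, peval Q (im m) <> RtoC 0.
Hypothesis HdD1 : (1 <= dD1)%nat.
Hypothesis HdD2 : (1 <= dD2)%nat.
Hypothesis Hd : forall l, (1 <= l <= D - 1)%nat -> (1 <= d l)%nat.

Notation rhs := (eq_rhs q k1 k2 D dD1 dD2 d delta Delta RD1 RD2 Rl p1).

(* All shifts [T^dD1], [T^dD2], [T^(d l)] are at least 1, so the coefficient of [T^n] on the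
   right-hand side only involves the coefficients [U k] with [k < n]. *)
Lemma eq_rhs_causal Cc Fh eps (U V : fps) n m :
  (forall k, (k < n)%nat -> forall m, U k m = V k m) -> rhs Cc Fh eps U n m = rhs Cc Fh eps V n m.
Proof.
  intros HUV. unfold eq_rhs, fps_add, fps_mulT, fps_mulm, fps_dil, sigma_qT, fps_scal.
  apply f_equal2; [|apply f_equal2; [|apply f_equal2; [|reflexivity]]].
  - destruct (Nat.leb dD1 n) eqn:E; [apply Nat.leb_le in E; rewrite HUV by lia|]; reflexivity.
  - destruct (Nat.leb dD2 n) eqn:E; [apply Nat.leb_le in E; rewrite HUV by lia|]; reflexivity.
  - apply sum_n_m_ext_loc. intros l Hl. specialize (Hd l Hl). apply f_equal2; [reflexivity|].
    destruct (Nat.leb (d l) n) eqn:E; [apply Nat.leb_le in E | reflexivity].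
    unfold fps_dil. apply f_equal2; [reflexivity|]. unfold fps_conv. apply sum_n_ext. intros j.
    destruct (Nat.leb j (n - d l)) eqn:E2; [apply Nat.leb_le in E2 | reflexivity].
    unfold integ, conv_integrand. do 3 f_equal.
    apply functional_extensionality. intros m1. rewrite HUV by lia. reflexivity.
Qed.

Lemma RtoC_pow_neq_0 n : RtoC (q ^ n) <> RtoC 0.
Proof. intros E. injection E. apply pow_nonzero, Hq. Qed.

Lemma solves_unique Cc Fh eps U V :
  solves q k1 k2 D dD1 dD2 d delta Delta Q RD1 RD2 Rl p1 Cc Fh eps U ->
  solves q k1 k2 D dD1 dD2 d delta Delta Q RD1 RD2 Rl p1 Cc Fh eps V ->
  forall n m, U n m = V n m.
Proof.
  intros [_ EU] [_ EV] n. induction n as [n IH] using (well_founded_induction Wf_nat.lt_wf).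
  intros m.
  assert (Hlhs : eq_lhs q Q U n m = eq_lhs q Q V n m).
  { rewrite EU, EV. apply eq_rhs_causal. exact IH. }
  unfold eq_lhs, fps_mulm, fps_dil in Hlhs.
  pose proof (HQ m). pose proof (RtoC_pow_neq_0 n).
  replace (U n m) with (Cmult (Cinv (Cmult (peval Q (im m)) (RtoC (q ^ n))))
    (Cmult (peval Q (im m)) (Cmult (RtoC (q ^ n)) (U n m)))) by (field; auto).
  rewrite Hlhs. field. auto.
Qed.

Variables (F : nat -> R -> C -> C) (Cc : nat -> nat -> R -> C -> C).

Definition next_coef (n : nat) (W : nat -> R -> C -> C) (m : R) (eps : C) : C :=
  Cmult (Cinv (Cmult (peval Q (im m)) (RtoC (q ^ n))))
    (rhs (fun l j m => Cc l j m eps) (fun n m => F n m eps) eps (fun n m => W n m eps) n m).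

(* [sol_upto N] holds the coefficients [0 .. N-1] of the solution (and 0 beyond). *)
Fixpoint sol_upto (N : nat) : nat -> R -> C -> C :=
  match N with
  | O => fun _ _ _ => RtoC 0
  | S N' => fun k => if Nat.eqb k N' then next_coef N' (sol_upto N') else sol_upto N' k
  end.

Definition sol (n : nat) : R -> C -> C := sol_upto (S n) n.

Lemma sol_upto_S N k :
  sol_upto (S N) k = if Nat.eqb k N then next_coef N (sol_upto N) else sol_upto N k.
Proof. reflexivity. Qed.

Lemma sol_upto_sol N k : (k < N)%nat -> sol_upto N k = sol k.
Proof.
  induction N as [|N IH]; intros Hk; [lia|]. rewrite sol_upto_S.
  destruct (Nat.eqb k N) eqn:E.
  - apply Nat.eqb_eq in E. subst. unfold sol. rewrite sol_upto_S, Nat.eqb_refl. reflexivity.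
  - apply Nat.eqb_neq in E. apply IH. lia.
Qed.

Lemma sol_next n m eps : sol n m eps = next_coef n sol m eps.
Proof.
  unfold sol at 1. rewrite sol_upto_S, Nat.eqb_refl. unfold next_coef. apply f_equal.
  apply eq_rhs_causal. intros k Hk m'. rewrite sol_upto_sol by auto. reflexivity.
Qed.

Lemma sol_eq eps :
  eq_lhs q Q (fun n m => sol n m eps) =
  rhs (fun l j m => Cc l j m eps) (fun n m => F n m eps) eps (fun n m => sol n m eps).
Proof.
  apply functional_extensionality; intros n. apply functional_extensionality; intros m.
  unfold eq_lhs, fps_mulm, fps_dil. rewrite sol_next. unfold next_coef.
  field. split; [apply RtoC_pow_neq_0 | apply HQ].
Qed.

End Recursion.

Lemma holoE_peval_ratio beta mu eps0 P degP Q degQ (c : C) f :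
  deg_le P degP -> (degP <= degQ)%nat -> has_deg Q degQ ->
  (forall m, peval Q (im m) <> RtoC 0) -> holoE beta mu eps0 f ->
  holoE beta mu eps0
    (fun e m => Cmult (Cmult c (Cmult (peval P (im m)) (Cinv (peval Q (im m))))) (f e m)).
Proof.
  intros HP HPQ HQ HQnz Hf.
  destruct (peval_im_ratio_bounded P degP Q degQ HP HPQ HQ HQnz) as [K HK].
  apply (holoE_mult_bounded beta mu eps0 _ (Cmod c * K)); [| | exact Hf].
  - intros x. apply continuous_Cmult; [apply continuous_const|].
    apply continuous_Cmult; [apply Ccont_peval_im|].
    apply continuous_Cinv; [apply Ccont_peval_im | apply HQnz].
  - intros m. rewrite Cmod_mult. apply Rmult_le_compat_l; [apply Cmod_ge_0 | apply HK].
Qed.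

Section SolutionHolomorphy.
Variables (q : R) (k1 k2 D dD1 dD2 : nat) (d delta Delta : nat -> nat)
  (Q RD1 RD2 : list C) (Rl : nat -> list C) (p1 : nat)
  (F : nat -> R -> C -> C) (Cc : nat -> nat -> R -> C -> C)
  (beta mu eps0 : R) (degR degQ : nat).
Hypothesis Hq : q <> 0.
Hypothesis HdD1 : (1 <= dD1)%nat.
Hypothesis HdD2 : (1 <= dD2)%nat.
Hypothesis Hd : forall l, (1 <= l <= D - 1)%nat -> (1 <= d l)%nat.
Hypothesis HdegRD1 : has_deg RD1 degR.
Hypothesis HdegRD2 : has_deg RD2 degR.
Hypothesis HdegQ : has_deg Q degQ.
Hypothesis HdegQR : (degR <= degQ)%nat.
Hypothesis HdegRl : forall l, (1 <= l <= D - 1)%nat -> deg_le (Rl l) degR.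
Hypothesis HQ : forall m : R, peval Q (im m) <> RtoC 0.
Hypothesis Hbeta : 0 <= beta.
Hypothesis Hmu : INR degR + 1 < mu.
Hypothesis HF : forall n, holoE beta mu eps0 (fun eps m => F n m eps).
Hypothesis HC : forall l j, (1 <= l <= D - 1)%nat -> (j <= p1)%nat ->
  holoE beta mu eps0 (fun eps m => Cc l j m eps).

Notation holo := (holoE beta mu eps0).
Notation U := (sol q k1 k2 D dD1 dD2 d delta Delta Q RD1 RD2 Rl p1 F Cc).
Notation Qq_inv n m := (Cinv (Cmult (peval Q (im m)) (RtoC (q ^ n)))).

Lemma holoE_shift_term (RD : list C) (c : R) (dd n : nat) : has_deg RD degR ->
  (forall k, (k < n)%nat -> holo (fun eps m => U k m eps)) -> (1 <= dd)%nat ->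
  holo (fun eps m => Cmult (Qq_inv n m)
    (if Nat.leb dd n then Cmult (peval RD (im m)) (Cmult (RtoC (c ^ (n - dd))) (U (n - dd) m eps))
     else RtoC 0)).
Proof.
  intros HRD IH Hdd. destruct (Nat.leb dd n) eqn:E.
  - apply Nat.leb_le in E.
    apply holoE_ext with (fun e m =>
      Cmult (Cmult (Cmult (Cinv (RtoC (q ^ n))) (RtoC (c ^ (n - dd))))
        (Cmult (peval RD (im m)) (Cinv (peval Q (im m))))) (U (n - dd) m e)).
    { intros e m. pose proof (HQ m). pose proof (RtoC_pow_neq_0 q Hq n). field. auto. }
    apply (holoE_peval_ratio beta mu eps0 RD degR Q degQ); auto;
      [exact (proj2 HRD) | apply IH; lia].
  - apply holoE_ext with (fun _ _ => RtoC 0); [intros; ring | apply holoE_zero].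
Qed.

Lemma holoE_forcing_term n :
  holo (fun eps m => Cmult (Qq_inv n m) (Cmult (RtoC (q ^ n)) (F n m eps))).
Proof.
  apply holoE_ext with (fun e m => Cmult (Cmult (RtoC 1)
    (Cmult (peval (RtoC 1 :: nil) (im m)) (Cinv (peval Q (im m))))) (F n m e)).
  { intros e m. pose proof (HQ m). pose proof (RtoC_pow_neq_0 q Hq n). simpl. field. auto. }
  apply (holoE_peval_ratio beta mu eps0 (RtoC 1 :: nil) 0 Q degQ); auto; [|lia].
  intros [|[|i]] Hi; simpl; auto; lia.
Qed.

Lemma holoE_conv_coef n l j p : (1 <= l <= D - 1)%nat -> (j <= p1)%nat ->
  holo (fun eps m => U p m eps) -> forall c : C,
  holo (fun eps m => Cmult (Cmult (Qq_inv n m) c)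
    (integ (conv_integrand (fun j m => Cc l j m eps) (Rl l) (fun n m => U n m eps) j p m))).
Proof.
  intros Hl Hj HU c.
  apply holoE_ext with (fun e m => Cmult (Cmult (Cmult (Cinv (RtoC (q ^ n))) c)
    (RtoC (/ sqrt (2 * PI)))) (conv_op Q (Rl l) (fun x => Cc l j x e) (fun x => U p x e) m)).
  { intros e m. pose proof (HQ m). pose proof (RtoC_pow_neq_0 q Hq n).
    unfold integ, conv_op. change (RInt_gen _ _ _) with
      (CRInt_line (conv_fun (Rl l) (fun x => Cc l j x e) (fun x => U p x e) m)).
    field. auto. }
  apply holoE_scal, (holoE_conv_op beta mu degR (Rl l) Hbeta Hmu (HdegRl l Hl) Q degQ);
    auto.
Qed.

Lemma holoE_conv_term n : (forall k, (k < n)%nat -> holo (fun eps m => U k m eps)) ->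
  holo (fun eps m => Cmult (Qq_inv n m)
    (sum_n_m (fun l => Cmult (Cpow eps (Delta l - d l)%nat)
       (if Nat.leb (d l) n then Cmult (RtoC (Rpower q (INR (delta l)) ^ (n - d l)%nat))
          (fps_conv (fun j m => Cc l j m eps) p1 (Rl l) (fun n m => U n m eps) (n - d l)%nat m)
        else RtoC 0)) 1 (D - 1))).
Proof.
  intros IH.
  apply holoE_ext with (fun e m => sum_n_m (fun l => Cmult (Cpow e (Delta l - d l)%nat)
     (Cmult (Qq_inv n m)
       (if Nat.leb (d l) n then Cmult (RtoC (Rpower q (INR (delta l)) ^ (n - d l)%nat))
          (fps_conv (fun j m => Cc l j m e) p1 (Rl l) (fun n m => U n m e) (n - d l)%nat m)
        else RtoC 0))) 1 (D - 1)).
  { intros e m. rewrite <- (sum_n_m_mult_l (K := C_Ring)). apply sum_n_m_ext. intros l.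
    change mult with Cmult. match goal with |- ?a = ?b => change (@eq C a b) end. ring. }
  apply holoE_sum_n_m. intros l Hl. apply holoE_Cpow.
  destruct (Nat.leb (d l) n) eqn:E; [apply Nat.leb_le in E|].
  2:{ apply holoE_ext with (fun _ _ => RtoC 0); [intros; ring | apply holoE_zero]. }
  set (c := RtoC (Rpower q (INR (delta l)) ^ (n - d l))).
  apply holoE_ext with (fun e m => sum_n (fun j => Cmult (Cmult (Qq_inv n m) c)
    (if Nat.leb j (n - d l) then integ (conv_integrand (fun j m => Cc l j m e) (Rl l)
       (fun n m => U n m e) j (n - d l - j)%nat m) else RtoC 0)) p1).
  { intros e m. unfold fps_conv, sum_n. rewrite (sum_n_m_mult_l (K := C_Ring)).
    change mult with Cmult. apply Cmult_assoc. }
  apply holoE_sum_n. intros j Hj. specialize (Hd l Hl).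
  destruct (Nat.leb j (n - d l)) eqn:E2; [apply Nat.leb_le in E2|].
  - apply holoE_conv_coef; auto. apply IH. lia.
  - apply holoE_ext with (fun _ _ => RtoC 0); [intros; ring | apply holoE_zero].
Qed.

Lemma holoE_sol n : holo (fun eps m => U n m eps).
Proof.
  induction n as [n IH] using (well_founded_induction Wf_nat.lt_wf).
  apply holoE_ext with
    (fun eps m => next_coef q k1 k2 D dD1 dD2 d delta Delta Q RD1 RD2 Rl p1 F Cc n U m eps);
    [intros; apply sol_next; auto|].
  assert (Hdistr : forall f g, holo (fun e m => Cmult (Qq_inv n m) (f e m)) ->
    holo (fun e m => Cmult (Qq_inv n m) (g e m)) ->
    holo (fun e m => Cmult (Qq_inv n m) (Cplus (f e m) (g e m)))).
  { intros f g H1 H2.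
    apply holoE_ext with
      (fun e m => Cplus (Cmult (Qq_inv n m) (f e m)) (Cmult (Qq_inv n m) (g e m)));
      [intros; ring | apply holoE_plus; auto]. }
  unfold next_coef, eq_rhs, fps_add, fps_mulT, fps_mulm, fps_dil, sigma_qT, fps_scal.
  apply Hdistr; [apply holoE_shift_term; auto|].
  apply Hdistr; [apply holoE_shift_term; auto|].
  apply Hdistr; [apply holoE_conv_term; auto | apply holoE_forcing_term].
Qed.

End SolutionHolomorphy.

Theorem proposition9
  (q : R) (k1 k2 : nat) (kappa : R)
  (D D1 D2 : nat) (dD1 dD2 : nat) (d delta Delta : nat -> nat)
  (Q RD1 RD2 : list C) (Rl : nat -> list C) (degR degQ : nat)
  (beta mu eps0 : R)
  (F : nat -> R -> C -> C) (CF T0 : R)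
  (p1 : nat) (Cc : nat -> nat -> R -> C -> C)
  (Hq : 1 < q)
  (Hk1 : (1 <= k1)%nat) (Hk12 : (k1 < k2)%nat)
  (Hkappa : / kappa = / INR k1 - / INR k2)
  (HD : (3 <= D)%nat) (HD1 : (3 <= D1)%nat) (HD2 : (3 <= D2)%nat)
  (HdD1 : (1 <= dD1)%nat) (HdD2 : (1 <= dD2)%nat)
  (Hd : forall l, (1 <= l <= D - 1)%nat -> (1 <= d l)%nat)
  (Hdelta : forall l, (1 <= l <= D - 1)%nat -> (1 <= delta l)%nat)
  (Hdelta1 : delta 1%nat = 1%nat)
  (Hdelta_incr : forall l, (1 <= l <= D - 2)%nat -> (delta l < delta (S l))%nat)
  (HDelta : forall l, (1 <= l <= D - 1)%nat -> (d l <= Delta l)%nat)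
  (Hc1 : forall l, (1 <= l <= D - 1)%nat -> INR (d l) / INR k2 + 1 >= INR (delta l))
  (Hc2 : forall l, (1 <= l <= D - 1)%nat ->
     (INR dD1 - 1) / kappa - INR (d l) / INR k2 >= INR (delta l) - 1)
  (Hc3 : forall l, (1 <= l <= D - 1)%nat -> (INR dD2 - 1) / INR k2 >= INR (delta l) - 1)
  (Hc4 : (k2 * dD1 < k1 * dD2)%nat)
  (HdegRD1 : has_deg RD1 degR) (HdegRD2 : has_deg RD2 degR)
  (HdegQ : has_deg Q degQ) (HdegQR : (degR <= degQ)%nat)
  (HdegRl : forall l, (1 <= l <= D - 1)%nat -> deg_le (Rl l) degR)
  (HQ : forall m : R, peval Q (im m) <> RtoC 0)
  (HRD1 : forall m : R, peval RD1 (im m) <> RtoC 0)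
  (HRD2 : forall m : R, peval RD2 (im m) <> RtoC 0)
  (Hbeta : 0 < beta) (Hmu : INR degR + 1 < mu)
  (Heps0 : 0 < eps0)
  (HF : forall n, holoE beta mu eps0 (fun eps m => F n m eps))
  (HCF : 0 < CF) (HT0 : 0 < T0)
  (HFbound : forall n eps, in_disc eps0 eps ->
     wnorm_le beta mu (fun m => F n m eps)
       (CF * / T0 ^ n * Rpower (Rpower q (/ INR k1)) (INR n * (INR n - 1) / 2)))
  (HC : forall l j, (1 <= l <= D - 1)%nat -> (j <= p1)%nat ->
     holoE beta mu eps0 (fun eps m => Cc l j m eps)) :
  let sol := fun (U : nat -> R -> C -> C) =>
    forall eps, in_disc eps0 eps ->
      solves q k1 k2 D dD1 dD2 d delta Delta Q RD1 RD2 Rl p1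
        (fun l j m => Cc l j m eps) (fun n m => F n m eps) eps
        (fun n m => U n m eps) in
  (exists U : nat -> R -> C -> C,
     sol U /\ forall n, holoE beta mu eps0 (fun eps m => U n m eps)) /\
  (forall U V : nat -> R -> C -> C, sol U -> sol V ->
     forall n m eps, in_disc eps0 eps -> U n m eps = V n m eps).
Proof.
  intros sol_pred. assert (Hq0 : q <> 0) by lra. assert (Hbeta0 : 0 <= beta) by lra.
  set (U := sol q k1 k2 D dD1 dD2 d delta Delta Q RD1 RD2 Rl p1 F Cc).
  assert (HU : forall n, holoE beta mu eps0 (fun eps m => U n m eps))
    by (intros n; apply (holoE_sol q k1 k2 D dD1 dD2 d delta Delta Q RD1 RD2 Rl p1 F Cc
                           beta mu eps0 degR degQ); auto).
  split.
  - exists U. split; [|exact HU]. intros eps He. split.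
    + intros l Hl n m j Hj Hjn.
      apply (ex_RInt_gen_conv_fun beta mu degR (Rl l)); [exact Hbeta0 | exact Hmu | auto | |].
      * apply (HC l j Hl Hj eps He).
      * apply (HU (n - j)%nat eps He).
    + apply sol_eq; auto.
  - intros V W HV HW n m eps He.
    exact (solves_unique q k1 k2 D dD1 dD2 d delta Delta Q RD1 RD2 Rl p1 Hq0 HQ HdD1 HdD2 Hd
             _ _ eps (fun n m => V n m eps) (fun n m => W n m eps) (HV eps He) (HW eps He) n m).
Qed.
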